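(* Let $c>1$ be a non-integral real number, let $L=\lfloor c\rfloor+1$ and let $m$ be a positive integer. For any $L$-tuple $h=(h_0,h_1,\ldots,h_{L-1})$ of integers which are not all $0$ and any positive integer $N$, we have \[\sum_{n=N}^{2N-1}e\Bigl(\frac1m\sum_{\ell=0}^{L-1}h_\ell (n+\ell)^c\Bigr)\ll_{L,c,m}\|h\|_\infty\,N^{1-\frac{\|c\|}{2^{(c+1)}}},\] as soon as $\|h\|_\infty=o\bigl(N^{1-\{c\}}\bigr)$ (that is: for $N$ and $h$ ranging so that $\|h\|_\infty/N^{1-\{c\}}\to 0$, the bound holds with an implied constant depending only on $L,c,m$).
   Context: $e(u)=\exp(2\pi i u)$. For $h\in\mathbb R^L$, $\|h\|_\infty=\max_i|h_i|$. For real $x$, $\{x\}=x-\lfloor x\rfloor$ is the fractional part and $\|x\|=\min\{\{x\},1-\{x\}\}$ is the distance from $x$ to the nearest integer. The exponent $2^{(c+1)}$ is the real power $2^{c+1}$. *)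

From Stdlib Require Import Reals List.
From Coquelicot Require Import Coquelicot.
Import ListNotations.
Open Scope R_scope.

(* floor x (as an integer): Stdlib's Int_part x = up x - 1 = floor x *)
Definition rfloor (x : R) : Z := Int_part x.

Definition fracp (x : R) : R := x - IZR (rfloor x).

Definition dist_int (x : R) : R := Rmin (fracp x) (1 - fracp x).

Definition e (u : R) : C := (cos (2 * PI * u), sin (2 * PI * u)).

Definition rsum_lt (L : nat) (f : nat -> R) : R :=
  fold_right Rplus 0 (map f (seq 0 L)).

Definition csum_N_2N (N : nat) (f : nat -> C) : C :=
  fold_right Cplus (RtoC 0) (map f (seq N N)).

Definition hnorm (L : nat) (h : nat -> Z) : R :=
  fold_right Rmax 0 (map (fun l => Rabs (IZR (h l))) (seq 0 L)).

Definition expsum (c : R) (m : nat) (L : nat) (h : nat -> Z) (N : nat) : C :=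
  csum_N_2N N (fun n =>
    e (/ INR m * rsum_lt L (fun l => IZR (h l) * Rpower (INR (n + l)) c))).

(* Write the phase as f(x) = (1/m) sum_l h_l (x + l)^c.  Newton's forward-difference
   expansion gives sum_l h_l (x + l)^b = sum_k B_k (Delta^k t^b)(x) with integer
   coefficients B_k = sum_l h_l binom(l, k), not all zero when h is not.  If B_k0 is the
   first nonzero one, the k0-th term dominates as soon as ||h|| is small compared to x.
   Hence, for q = L - k0, on [N, (L + 2) N] the derivative f^(q) has constant sign and
   N^({c} - 1) << |f^(q)| <= Lambda = O(||h|| N^({c} - 1)), and f^(q+1) has constant sign.
   Weyl-van der Corput differencing p = q - 1 times reduces the sum to sums whose first
   differences are, by the mean value theorem, the product of the steps times values of
   f^(q); Kusmin-Landau bounds those by O(N^(1 - {c})).  The result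
   N/T + N^(1 - 2^-p) N^((1 - {c}) 2^-p), with T = min(1 / (4 Lambda), N)^(2^-(p+1)),
   is O(||h|| N^(1 - ||c|| / 2^(c+1))).  There are only finitely many k0, so the
   constants can be taken uniform. *)

From Stdlib Require Import Reals Lra Lia List Arith ZArith Wf_nat Classical.
From Coquelicot Require Import Coquelicot.
Import ListNotations.
Open Scope R_scope.

(** * Finite sums *)

Fixpoint rsum (f : nat -> R) (n : nat) : R :=
  match n with O => 0 | S k => rsum f k + f k end.
Fixpoint csum (f : nat -> C) (n : nat) : C :=
  match n with O => RtoC 0 | S k => (csum f k + f k)%C end.

Lemma rsum_ext f g n : (forall i, (i < n)%nat -> f i = g i) -> rsum f n = rsum g n.
Proof.
  induction n as [|n IH]; simpl; intros H; auto.
  rewrite IH by (intros; apply H; lia). now rewrite H by lia.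
Qed.

Lemma csum_ext f g n : (forall i, (i < n)%nat -> f i = g i) -> csum f n = csum g n.
Proof.
  induction n as [|n IH]; simpl; intros H; auto.
  rewrite IH by (intros; apply H; lia). now rewrite H by lia.
Qed.

Lemma rsum_le f g n : (forall i, (i < n)%nat -> f i <= g i) -> rsum f n <= rsum g n.
Proof.
  induction n as [|n IH]; simpl; intros H; [lra|].
  assert (f n <= g n) by (apply H; lia).
  assert (rsum f n <= rsum g n) by (apply IH; intros; apply H; lia).
  lra.
Qed.

Lemma rsum_const x n : rsum (fun _ => x) n = INR n * x.
Proof. induction n as [|n IH]; simpl rsum; [simpl; lra|]. rewrite IH, S_INR. lra. Qed.

Lemma rsum_plus f g n : rsum (fun i => f i + g i) n = rsum f n + rsum g n.
Proof. induction n; simpl; lra. Qed.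

Lemma rsum_scal a f n : rsum (fun i => a * f i) n = a * rsum f n.
Proof. induction n as [|n IH]; simpl; [lra|]. rewrite IH; lra. Qed.

Lemma rsum_zero f n : (forall i, (i < n)%nat -> f i = 0) -> rsum f n = 0.
Proof. intros H. rewrite (rsum_ext f (fun _ => 0)), rsum_const by auto. lra. Qed.

Lemma rsum_nonneg f n : (forall i, (i < n)%nat -> 0 <= f i) -> 0 <= rsum f n.
Proof. intros H. rewrite <- (rsum_zero (fun _ => 0) n) by auto. now apply rsum_le. Qed.

Lemma rsum_split f m n : rsum f (m + n) = rsum f m + rsum (fun i => f (m + i)%nat) n.
Proof.
  induction n as [|n IH]; simpl; [rewrite Nat.add_0_r; lra|].
  rewrite Nat.add_succ_r; simpl; rewrite IH; lra.
Qed.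

Lemma rsum_extend f m n :
  (m <= n)%nat -> (forall k, (m <= k < n)%nat -> f k = 0) -> rsum f m = rsum f n.
Proof.
  intros Hmn H. replace n with (m + (n - m))%nat by lia.
  rewrite rsum_split, (rsum_zero (fun i => f (m + i)%nat)); [lra | intros; apply H; lia].
Qed.

Lemma rsum_shift f n : rsum f (S n) = f O + rsum (fun i => f (S i)) n.
Proof. change (S n) with (1 + n)%nat. rewrite rsum_split. simpl. lra. Qed.

Lemma csum_shift f n : csum f (S n) = (f O + csum (fun i => f (S i)) n)%C.
Proof.
  induction n as [|n IH]; simpl; [ring|]. simpl in IH. rewrite IH. ring.
Qed.

Lemma rsum_ge_term f n j :
  (forall i, (i < n)%nat -> 0 <= f i) -> (j < n)%nat -> f j <= rsum f n.
Proof.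
  intros H Hj. replace n with (j + S (n - S j))%nat by lia.
  rewrite rsum_split, rsum_shift, Nat.add_0_r.
  assert (0 <= rsum f j) by (apply rsum_nonneg; intros; apply H; lia).
  assert (0 <= rsum (fun i => f (j + S i)%nat) (n - S j))
    by (apply rsum_nonneg; intros; apply H; lia).
  lra.
Qed.

Lemma rsum_single f n j :
  (j < n)%nat -> (forall i, (i < n)%nat -> i <> j -> f i = 0) -> rsum f n = f j.
Proof.
  intros Hj H. replace n with (j + S (n - S j))%nat by lia.
  rewrite rsum_split, rsum_shift, Nat.add_0_r, rsum_zero, rsum_zero;
    [lra | intros; apply H; lia..].
Qed.

Lemma rsum_swap (F : nat -> nat -> R) m n :
  rsum (fun i => rsum (F i) n) m = rsum (fun j => rsum (fun i => F i j) m) n.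
Proof.
  induction m as [|m IH]; simpl; [now rewrite rsum_zero|].
  now rewrite IH, <- rsum_plus.
Qed.

Lemma Rabs_rsum_le f n : Rabs (rsum f n) <= rsum (fun i => Rabs (f i)) n.
Proof.
  induction n; simpl; [rewrite Rabs_R0; lra|].
  eapply Rle_trans; [apply Rabs_triang | lra].
Qed.

Lemma rsum_sqr_le f n : rsum f n ^ 2 <= INR n * rsum (fun i => f i ^ 2) n.
Proof.
  induction n as [|n IH]; [simpl; lra|]. cbn [rsum]. rewrite S_INR.
  assert (H : 2 * f n * rsum f n <= INR n * f n ^ 2 + rsum (fun i => f i ^ 2) n).
  { rewrite <- rsum_scal, <- rsum_const, <- rsum_plus. apply rsum_le; intros i _.
    pose proof (pow2_ge_0 (f i - f n)). nra. }
  nra.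
Qed.

Lemma Cmod_csum_le f n : Cmod (csum f n) <= rsum (fun i => Cmod (f i)) n.
Proof.
  induction n; simpl; [rewrite Cmod_0; lra|].
  eapply Rle_trans; [apply Cmod_triangle | lra].
Qed.

Lemma csum_fst f n : fst (csum f n) = rsum (fun i => fst (f i)) n.
Proof. induction n as [|n IH]; simpl; auto. now rewrite IH. Qed.

Lemma csum_snd f n : snd (csum f n) = rsum (fun i => snd (f i)) n.
Proof. induction n as [|n IH]; simpl; auto. now rewrite IH. Qed.

Lemma Cmod_sqr z : Cmod z ^ 2 = fst z ^ 2 + snd z ^ 2.
Proof.
  unfold Cmod. rewrite pow2_sqrt; auto.
  pose proof (pow2_ge_0 (fst z)); pose proof (pow2_ge_0 (snd z)); lra.
Qed.

Lemma Cmod_le_Rabs_fst_snd (z : C) : Cmod z <= Rabs (fst z) + Rabs (snd z).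
Proof.
  pose proof (Rabs_pos (fst z)); pose proof (Rabs_pos (snd z)).
  unfold Cmod. rewrite <- (sqrt_pow2 (Rabs (fst z) + Rabs (snd z))) by lra.
  apply sqrt_le_1_alt. rewrite <- (pow2_abs (fst z)), <- (pow2_abs (snd z)). nra.
Qed.

Lemma e_plus x y : e (x + y) = (e x * e y)%C.
Proof.
  unfold e, Cmult; simpl; replace (2 * PI * (x + y)) with (2 * PI * x + 2 * PI * y) by ring.
  rewrite cos_plus, sin_plus. f_equal; ring.
Qed.

Lemma Cmod_e x : Cmod (e x) = 1.
Proof.
  unfold Cmod, e; cbn [fst snd].
  pose proof (sin2_cos2 (2 * PI * x)) as H. unfold Rsqr in H.
  replace (cos (2 * PI * x) ^ 2 + sin (2 * PI * x) ^ 2) with 1 by lra. exact sqrt_1.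
Qed.

Lemma e_plus_INR x n : e (x + INR n) = e x.
Proof.
  unfold e; replace (2 * PI * (x + INR n)) with (2 * PI * x + 2 * INR n * PI) by ring.
  now rewrite cos_period, sin_period.
Qed.

(** * The Kusmin-Landau inequality *)

Definition esum (th : nat -> R) (N : nat) : C := csum (fun i => e (th i)) N.

Definition cotpi (x : R) : R := cos (PI * x) / sin (PI * x).

Lemma sin_PI_mult_pos x : 0 < x < 1 -> 0 < sin (PI * x).
Proof. intros. pose proof PI_RGT_0. apply sin_gt_0; nra. Qed.

Lemma cotpi_decreasing x y : 0 < x -> x <= y -> y < 1 -> cotpi y <= cotpi x.
Proof.
  intros. unfold cotpi.
  assert (Hx : 0 < sin (PI * x)) by (apply sin_PI_mult_pos; lra).
  assert (Hy : 0 < sin (PI * y)) by (apply sin_PI_mult_pos; lra).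
  assert (Hxy : 0 <= sin (PI * y - PI * x)) by (pose proof PI_RGT_0; apply sin_ge_0; nra).
  rewrite sin_minus in Hxy.
  apply Rmult_le_reg_r with (sin (PI * x) * sin (PI * y)); [nra|].
  field_simplify; lra.
Qed.

Lemma cotpi_1_minus x : cotpi (1 - x) = - cotpi x.
Proof.
  unfold cotpi. replace (PI * (1 - x)) with (PI - PI * x) by ring.
  rewrite cos_minus, sin_minus, cos_PI, sin_PI. unfold Rdiv.
  replace (-1 * cos (PI * x) + 0 * sin (PI * x)) with (- cos (PI * x)) by ring.
  replace (0 * cos (PI * x) - -1 * sin (PI * x)) with (sin (PI * x)) by ring.
  ring.
Qed.

Lemma Rabs_cotpi_le l x : 0 < l <= / 2 -> l <= x <= 1 - l -> Rabs (cotpi x) <= cotpi l.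
Proof.
  intros. apply Rabs_le.
  pose proof (cotpi_decreasing l x ltac:(lra) ltac:(lra) ltac:(lra)).
  pose proof (cotpi_decreasing x (1 - l) ltac:(lra) ltac:(lra) ltac:(lra)).
  rewrite cotpi_1_minus in *. lra.
Qed.

Lemma cotpi_le_inv l : 0 < l <= / 2 -> cotpi l <= / l.
Proof.
  intros Hl. pose proof PI2_3_2 as Hpi. pose proof PI_4 as Hpi'. set (t := PI * l).
  assert (Ht : 0 < t <= 2) by (unfold t; nra).
  assert (Hsin : t - t ^ 3 / 6 <= sin t).
  { pose proof (sin_bound t 0 ltac:(lra) ltac:(lra)) as [H _].
    unfold sin_approx, sin_term in H. simpl in H. lra. }
  assert (Hsin' : t / 3 <= sin t) by nra.
  pose proof (COS_bound t) as [_ Hcos].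
  unfold cotpi, Rdiv. fold t.
  apply Rle_trans with (1 * / sin t).
  - apply Rmult_le_compat_r; [left; apply Rinv_0_lt_compat|]; lra.
  - rewrite Rmult_1_l. apply Rinv_le_contravar; [lra|]. unfold t in *. nra.
Qed.

Lemma csum_by_parts (u w : nat -> C) n :
  csum (fun i => ((u (S i) - u i) * w i)%C) (S n) =
  (u (S n) * w n - u O * w O - csum (fun i => u (S i) * (w (S i) - w i)) n)%C.
Proof.
  induction n as [|n IH]; [simpl; ring|].
  change (csum (fun i => ((u (S i) - u i) * w i)%C) (S (S n)))
    with (csum (fun i => ((u (S i) - u i) * w i)%C) (S n) + (u (S (S n)) - u (S n)) * w (S n))%C.
  rewrite IH. simpl. ring.
Qed.

(* [1 / (e x - 1) = - 1 / 2 - (i / 2) cot (pi x)] *)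
Definition inv_e_sub1 (x : R) : C := (- / 2, - cotpi x / 2).

Lemma inv_e_sub1_spec x : 0 < x < 1 -> ((e x - 1) * inv_e_sub1 x)%C = 1.
Proof.
  intros Hx. pose proof (sin_PI_mult_pos x Hx).
  pose proof (sin2_cos2 (PI * x)) as H2. unfold Rsqr in H2.
  unfold e, inv_e_sub1, cotpi, Cmult, Cminus, Cplus, Copp, RtoC; simpl.
  replace (2 * PI * x) with (2 * (PI * x)) by ring. rewrite cos_2a_sin, sin_2a.
  f_equal; field_simplify; try lra; nra.
Qed.

Lemma Cmod_inv_e_sub1_le l x :
  0 < l <= / 2 -> l <= x <= 1 - l -> Cmod (inv_e_sub1 x) <= (1 + cotpi l) / 2.
Proof.
  intros Hl Hx. eapply Rle_trans; [apply Cmod_le_Rabs_fst_snd|]. simpl.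
  pose proof (Rabs_cotpi_le l x Hl Hx).
  rewrite Rabs_Ropp, Rabs_pos_eq by lra. unfold Rdiv. rewrite Rabs_mult, Rabs_Ropp.
  rewrite (Rabs_pos_eq (/ 2)) by lra. lra.
Qed.

Lemma Cmod_inv_e_sub1_sub x y :
  Cmod (inv_e_sub1 x - inv_e_sub1 y)%C <= / 2 * Rabs (cotpi x - cotpi y).
Proof.
  eapply Rle_trans; [apply Cmod_le_Rabs_fst_snd|]. simpl.
  replace (- / 2 + - - / 2) with 0 by ring.
  replace (- cotpi x / 2 + - (- cotpi y / 2)) with (- / 2 * (cotpi x - cotpi y)) by field.
  rewrite Rabs_R0, Rabs_mult, Rabs_Ropp, (Rabs_pos_eq (/ 2)) by lra. lra.
Qed.

Lemma rsum_telescope (x : nat -> R) k : rsum (fun i => x (S i) - x i) k = x k - x O.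
Proof. induction k as [|k IH]; simpl; [lra|]. rewrite IH; lra. Qed.

Lemma rsum_Rabs_diff_monotone_le (x : nat -> R) k b :
  (forall i, (i < k)%nat -> x i <= x (S i)) \/ (forall i, (i < k)%nat -> x (S i) <= x i) ->
  (forall i, (i <= k)%nat -> Rabs (x i) <= b) ->
  rsum (fun i => Rabs (x (S i) - x i)) k <= 2 * b.
Proof.
  intros Hmono Hb.
  pose proof (proj1 (Rabs_le_between _ _) (Hb k (le_n k))) as Hk.
  pose proof (proj1 (Rabs_le_between _ _) (Hb O (Nat.le_0_l k))) as H0.
  destruct Hmono as [Hx|Hx].
  - rewrite (rsum_ext _ (fun i => x (S i) - x i)), rsum_telescope; [lra|].
    intros i Hi; specialize (Hx i Hi); apply Rabs_pos_eq; lra.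
  - rewrite (rsum_ext _ (fun i => -1 * (x (S i) - x i))), rsum_scal, rsum_telescope; [lra|].
    intros i Hi; specialize (Hx i Hi); rewrite Rabs_left1; lra.
Qed.

Lemma rsum_Cmod_inv_e_sub1_diff_le (g : nat -> R) k l :
  0 < l <= / 2 -> (forall i, (i <= k)%nat -> l <= g i <= 1 - l) ->
  (forall i, (i < k)%nat -> g i <= g (S i)) \/ (forall i, (i < k)%nat -> g (S i) <= g i) ->
  rsum (fun i => Cmod (inv_e_sub1 (g (S i)) - inv_e_sub1 (g i))%C) k <= cotpi l.
Proof.
  intros Hl Hg Hmono.
  eapply Rle_trans; [apply rsum_le; intros i _; apply Cmod_inv_e_sub1_sub|].
  rewrite rsum_scal.
  enough (rsum (fun i => Rabs (cotpi (g (S i)) - cotpi (g i))) k <= 2 * cotpi l) by lra.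
  apply (rsum_Rabs_diff_monotone_le (fun i => cotpi (g i))).
  - destruct Hmono as [H|H]; [right|left]; intros i Hi;
      pose proof (Hg i ltac:(lia)); pose proof (Hg (S i) ltac:(lia));
      apply cotpi_decreasing; try apply H; lia || lra.
  - intros i Hi. now apply Rabs_cotpi_le, Hg.
Qed.

(* Kusmin-Landau, by Abel summation against the weights [1 / (e (th (i+1) - th i) - 1)]. *)
Lemma kusmin_landau (th : nat -> R) (N : nat) (l : R) :
  0 < l <= / 2 ->
  (forall i, (S i < N)%nat -> l <= th (S i) - th i <= 1 - l) ->
  (forall i, (S (S i) < N)%nat -> th (S i) - th i <= th (S (S i)) - th (S i)) \/
  (forall i, (S (S i) < N)%nat -> th (S (S i)) - th (S i) <= th (S i) - th i) ->
  Cmod (esum th N) <= 4 / l.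
Proof.
  intros Hl Hg Hmono.
  assert (Hl2 : 2 <= / l) by (rewrite <- (Rinv_inv 2); apply Rinv_le_contravar; lra).
  unfold Rdiv. destruct N as [|[|k]].
  - unfold esum; simpl. rewrite Cmod_0. lra.
  - unfold esum; simpl. eapply Rle_trans; [apply Cmod_triangle|]. rewrite Cmod_0, Cmod_e. lra.
  - set (u i := e (th i)). set (g i := th (S i) - th i). set (w i := inv_e_sub1 (g i)).
    assert (Hu : forall i, Cmod (u i) = 1) by (intros; apply Cmod_e).
    assert (Hw : forall i j, (i <= k)%nat -> Cmod (u j * w i)%C <= (1 + cotpi l) / 2).
    { intros i j Hi. rewrite Cmod_mult, Hu, Rmult_1_l.
      apply Cmod_inv_e_sub1_le; auto. apply Hg; lia. }
    assert (Hsum : esum th (S (S k)) =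
                   (csum (fun i => (u (S i) - u i) * w i) (S k) + u (S k))%C).
    { change (esum th (S (S k))) with (csum u (S k) + u (S k))%C.
      f_equal. apply csum_ext; intros i Hi.
      assert (E : u (S i) = (u i * e (g i))%C) by (unfold u, g; rewrite <- e_plus; f_equal; ring).
      rewrite E.
      replace ((u i * e (g i) - u i) * w i)%C with (u i * ((e (g i) - 1) * w i))%C by ring.
      unfold w. rewrite inv_e_sub1_spec; [ring|]. specialize (Hg i ltac:(lia)). unfold g. lra. }
    set (V := csum (fun i => u (S i) * (w (S i) - w i))%C k).
    assert (HV : Cmod V <= cotpi l).
    { eapply Rle_trans; [apply Cmod_csum_le|].
      rewrite (rsum_ext _ (fun i => Cmod (w (S i) - w i)))
        by (intros; now rewrite Cmod_mult, Hu, Rmult_1_l).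
      apply rsum_Cmod_inv_e_sub1_diff_le; auto.
      - intros i Hi. apply Hg. lia.
      - destruct Hmono as [H|H]; [left|right]; intros i Hi; apply H; lia. }
    rewrite Hsum, csum_by_parts. fold V.
    pose proof (Hw k (S k) (le_n k)) as Hk. pose proof (Hw O O (Nat.le_0_l k)) as H0.
    pose proof (Cmod_triangle (u (S k) * w k - u O * w O - V) (u (S k))) as T1.
    pose proof (Cmod_triangle (u (S k) * w k - u O * w O) (- V)) as T2.
    pose proof (Cmod_triangle (u (S k) * w k) (- (u O * w O))) as T3.
    unfold Cminus in *. rewrite Cmod_opp in T2, T3. rewrite Hu in T1.
    pose proof (cotpi_le_inv l Hl). lra.
Qed.

Lemma kusmin_landau_sym (th : nat -> R) (N : nat) (l : R) :
  0 < l <= / 2 ->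
  (forall i, (S i < N)%nat -> l <= th (S i) - th i <= / 2) \/
  (forall i, (S i < N)%nat -> l <= th i - th (S i) <= / 2) ->
  (forall i, (S (S i) < N)%nat -> th (S i) - th i <= th (S (S i)) - th (S i)) \/
  (forall i, (S (S i) < N)%nat -> th (S (S i)) - th (S i) <= th (S i) - th i) ->
  Cmod (esum th N) <= 4 / l.
Proof.
  intros Hl [Hg|Hg] Hmono.
  - apply kusmin_landau; auto. intros i Hi. specialize (Hg i Hi). lra.
  - replace (esum th N) with (esum (fun n => th n + INR n) N)
      by (apply csum_ext; intros; now rewrite e_plus_INR).
    apply kusmin_landau; auto.
    + intros i Hi. specialize (Hg i Hi). rewrite S_INR. lra.
    + destruct Hmono as [H|H]; [left|right]; intros i Hi; specialize (H i Hi);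
        rewrite !S_INR; lra.
Qed.

(** * The Weyl-van der Corput inequality *)

Definition dlt (d : nat) (th : nat -> R) (n : nat) : R := th (n + d)%nat - th n.

Definition pad (P N : nat) (x : nat -> R) (j : nat) : R :=
  if andb (P <=? j)%nat (j <? P + N)%nat then x (j - P)%nat else 0.

Lemma pad_in P N x i : (i < N)%nat -> pad P N x (P + i) = x i.
Proof.
  intros Hi. unfold pad.
  destruct (Nat.leb_spec P (P + i)), (Nat.ltb_spec (P + i) (P + N)); try lia.
  simpl. f_equal. lia.
Qed.

Lemma pad_out P N x j : (j < P \/ P + N <= j)%nat -> pad P N x j = 0.
Proof.
  intros Hj. unfold pad.
  destruct (Nat.leb_spec P j), (Nat.ltb_spec j (P + N)); simpl; auto; lia.
Qed.

Lemma rsum_window f M p n :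
  (p + n <= M)%nat -> (forall m, (m < p \/ p + n <= m)%nat -> f m = 0) ->
  rsum f M = rsum (fun i => f (p + i)%nat) n.
Proof.
  intros Hle H. replace M with (p + n + (M - (p + n)))%nat by lia.
  rewrite !rsum_split, (rsum_zero f p), (rsum_zero (fun i => f (p + n + i)%nat));
    [lra | intros; apply H; lia..].
Qed.

Lemma rsum_pad P N x s :
  (s <= P)%nat -> rsum (fun m => pad P N x (m + s)) (P + N) = rsum x N.
Proof.
  intros Hs. rewrite (rsum_window _ _ (P - s) N) by (lia || (intros; apply pad_out; lia)).
  apply rsum_ext; intros i Hi. replace (P - s + i + s)%nat with (P + i)%nat by lia.
  now apply pad_in.
Qed.

Lemma rsum_pad_corr P N x y s d :
  (s <= P)%nat ->
  rsum (fun m => pad P N x (m + s) * pad P N y (m + s + d)) (P + N) =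
  rsum (fun i => x i * y (i + d)%nat) (N - d).
Proof.
  intros Hs. rewrite (rsum_window _ _ (P - s) (N - d)); [| lia |].
  - apply rsum_ext; intros i Hi.
    replace (P - s + i + s)%nat with (P + i)%nat by lia.
    replace (P + i + d)%nat with (P + (i + d))%nat by lia.
    rewrite !pad_in by lia. reflexivity.
  - intros m [Hm|Hm]; [rewrite (pad_out P N x) | rewrite (pad_out P N y)]; lia || ring.
Qed.

Lemma rsum_sqr f n : rsum f n ^ 2 = rsum (fun s => rsum (fun t => f s * f t) n) n.
Proof.
  replace (rsum f n ^ 2) with (rsum f n * rsum f n) by ring.
  rewrite <- rsum_scal. apply rsum_ext; intros s _. now rewrite Rmult_comm, <- rsum_scal.
Qed.

Section Weyl_van_der_Corput.

Variables (th : nat -> R) (N Q : nat) (B : R).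
Hypothesis HQ : (1 <= Q <= N)%nat.
Hypothesis HB : 0 <= B.
Hypothesis Hdiff : forall d, (1 <= d < Q)%nat -> Cmod (esum (dlt d th) (N - d)) <= B.

Let P := (Q - 1)%nat.
Let xc i := cos (2 * PI * th i).
Let xs i := sin (2 * PI * th i).
Let G s t := rsum (fun m => pad P N xc (m + s) * pad P N xc (m + t) +
                            pad P N xs (m + s) * pad P N xs (m + t)) (P + N).

Lemma gram_diag s : (s <= P)%nat -> G s s = INR N.
Proof.
  intros Hs. unfold G.
  rewrite (rsum_ext _ (fun m => pad P N xc (m + s) * pad P N xc (m + s + 0) +
                               pad P N xs (m + s) * pad P N xs (m + s + 0)))
    by (intros; now rewrite Nat.add_0_r).
  rewrite rsum_plus, !rsum_pad_corr, Nat.sub_0_r, <- rsum_plus by auto.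
  rewrite <- (Rmult_1_r (INR N)), <- rsum_const.
  apply rsum_ext; intros i _. rewrite Nat.add_0_r.
  pose proof (sin2_cos2 (2 * PI * th i)) as H. unfold Rsqr in H. unfold xc, xs. lra.
Qed.

Lemma gram_offdiag s d : (1 <= d)%nat -> (s + d <= P)%nat -> G s (s + d) <= B.
Proof.
  intros Hd Hsd. unfold G.
  rewrite (rsum_ext _ (fun m => pad P N xc (m + s) * pad P N xc (m + s + d) +
                               pad P N xs (m + s) * pad P N xs (m + s + d)))
    by (intros; now rewrite Nat.add_assoc).
  rewrite rsum_plus, !rsum_pad_corr, <- rsum_plus by lia.
  eapply Rle_trans; [| apply (Hdiff d); unfold P in *; lia].
  eapply Rle_trans; [| apply re_le_Cmod]. eapply Rle_trans; [| apply Rle_abs].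
  unfold esum, Re. rewrite csum_fst. right. apply rsum_ext; intros i _.
  unfold xc, xs, dlt, e. simpl. rewrite <- cos_minus, <- cos_neg. f_equal. ring.
Qed.

Lemma gram_le s t : (s <= P)%nat -> (t <= P)%nat ->
  G s t <= (if Nat.eq_dec s t then INR N else 0) + B.
Proof.
  intros Hs Ht. destruct (Nat.eq_dec s t) as [<-|Hst].
  - rewrite gram_diag by auto. lra.
  - rewrite Rplus_0_l. destruct (Nat.lt_ge_cases s t).
    + replace t with (s + (t - s))%nat by lia. apply gram_offdiag; lia.
    + replace (G s t) with (G t s) by (apply rsum_ext; intros; ring).
      replace s with (t + (s - t))%nat by lia. apply gram_offdiag; lia.
Qed.

Lemma gram_sum_le : rsum (fun s => rsum (G s) Q) Q <= INR Q * (INR N + INR Q * B).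
Proof.
  rewrite <- rsum_const. apply rsum_le; intros s Hs.
  eapply Rle_trans; [apply rsum_le; intros t Ht; apply gram_le; unfold P; lia|].
  rewrite rsum_plus, rsum_const, (rsum_single _ _ s)
    by (lia || (intros; destruct Nat.eq_dec; lia || auto)).
  destruct (Nat.eq_dec s s); [lra | easy].
Qed.

(* Weyl-van der Corput: average the sum over [Q] shifted windows, then apply Cauchy-Schwarz. *)
Lemma weyl_van_der_corput :
  Cmod (esum th N) ^ 2 <= 2 * INR N ^ 2 / INR Q + 2 * INR N * B.
Proof.
  set (M := (P + N)%nat).
  set (A x m := rsum (fun s => pad P N x (m + s)) Q).
  assert (HA : forall x, rsum (A x) M = INR Q * rsum x N).
  { intros x. unfold A, M. rewrite rsum_swap, <- rsum_const.
    apply rsum_ext; intros s Hs. apply rsum_pad; unfold P; lia. }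
  assert (Hsq : rsum (fun m => A xc m ^ 2 + A xs m ^ 2) M = rsum (fun s => rsum (G s) Q) Q).
  { rewrite (rsum_ext _ (fun m => rsum (fun s => rsum (fun t =>
        pad P N xc (m + s) * pad P N xc (m + t) + pad P N xs (m + s) * pad P N xs (m + t)) Q) Q)).
    - rewrite rsum_swap. apply rsum_ext; intros s _. now rewrite rsum_swap.
    - intros m _. unfold A. rewrite !rsum_sqr, <- rsum_plus.
      apply rsum_ext; intros s _. now rewrite <- rsum_plus. }
  assert (Hcs : (INR Q * rsum xc N) ^ 2 + (INR Q * rsum xs N) ^ 2 <=
                INR M * (INR Q * (INR N + INR Q * B))).
  { rewrite <- !HA. pose proof (rsum_sqr_le (A xc) M). pose proof (rsum_sqr_le (A xs) M).
    pose proof gram_sum_le. rewrite rsum_plus in Hsq. pose proof (pos_INR M). nra. }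
  assert (HS : Cmod (esum th N) ^ 2 = rsum xc N ^ 2 + rsum xs N ^ 2)
    by (rewrite Cmod_sqr; unfold esum; now rewrite csum_fst, csum_snd).
  assert (HQ1 : 1 <= INR Q) by (apply (le_INR 1); lia).
  assert (HM : INR M <= 2 * INR N)
    by (replace (2 * INR N) with (INR (2 * N)) by (rewrite mult_INR; simpl; ring);
        apply le_INR; unfold M, P; lia).
  rewrite HS. apply Rmult_le_reg_l with (INR Q ^ 2); [nra|].
  replace (INR Q ^ 2 * (2 * INR N ^ 2 / INR Q + 2 * INR N * B))
    with (2 * INR N * (INR Q * (INR N + INR Q * B))) by (field; lra).
  assert (0 <= INR Q * (INR N + INR Q * B)) by (pose proof (pos_INR N); nra).
  nra.
Qed.

End Weyl_van_der_Corput.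

Fixpoint dlts (rs : list nat) (th : nat -> R) : nat -> R :=
  match rs with [] => th | r :: rs' => dlts rs' (dlt r th) end.

Fixpoint admissible (T : R) (rs : list nat) : Prop :=
  match rs with
  | [] => True
  | r :: rs' => (1 <= r)%nat /\ INR r <= T ^ 2 /\ admissible (T ^ 2) rs'
  end.

Lemma sqrt_plus_le x y : 0 <= x -> 0 <= y -> sqrt (x + y) <= sqrt x + sqrt y.
Proof.
  intros. pose proof (sqrt_pos x); pose proof (sqrt_pos y).
  rewrite <- (sqrt_pow2 (sqrt x + sqrt y)) by lra. apply sqrt_le_1_alt.
  replace ((sqrt x + sqrt y) ^ 2) with (Rsqr (sqrt x) + Rsqr (sqrt y) + 2 * sqrt x * sqrt y)
    by (unfold Rsqr; ring).
  rewrite !Rsqr_sqrt by auto. nra.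
Qed.

Lemma Cmod_le_sqrt_plus z a b :
  0 <= a -> 0 <= b -> Cmod z ^ 2 <= a + b -> Cmod z <= sqrt a + sqrt b.
Proof.
  intros. eapply Rle_trans; [|apply sqrt_plus_le; auto].
  rewrite <- (sqrt_pow2 (Cmod z)) by apply Cmod_ge_0. now apply sqrt_le_1_alt.
Qed.

Lemma exists_nat_between_half y : 1 <= y -> exists n : nat, (1 <= n)%nat /\ y / 2 <= INR n <= y.
Proof.
  intros Hy. destruct (base_Int_part y) as [H1 H2].
  assert (Hz : (1 <= Int_part y)%Z).
  { destruct (Z.le_gt_cases 1 (Int_part y)) as [|Hlt]; auto.
    assert (IZR (Int_part y) <= 0) by (apply IZR_le; lia). lra. }
  exists (Z.to_nat (Int_part y)). rewrite INR_IZR_INZ, Z2Nat.id by lia.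
  split; [lia|]. apply IZR_le in Hz. lra.
Qed.

Lemma Rpower_ge_1 x y : 1 <= x -> 0 <= y -> 1 <= Rpower x y.
Proof. intros. rewrite <- (Rpower_O x) by lra. apply Rle_Rpower; lra. Qed.

Lemma sqrt_mul_Rpower N B w :
  1 <= N -> 1 <= B ->
  sqrt (N * (Rpower N (1 - w) * Rpower B w)) = Rpower N (1 - w / 2) * Rpower B (w / 2).
Proof.
  intros HN HB.
  rewrite <- Rpower_sqrt
    by (apply Rmult_lt_0_compat; [lra | apply Rmult_lt_0_compat; apply exp_pos]).
  rewrite <- (Rpower_1 N) at 1 by lra. rewrite <- Rmult_assoc, <- Rpower_plus.
  rewrite <- Rpower_mult_distr by apply exp_pos. rewrite !Rpower_mult. f_equal; f_equal; field.
Qed.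

Lemma sqrt_le_Rpower N B w :
  1 <= N -> 1 <= B -> 0 <= w <= 1 -> sqrt N <= Rpower N (1 - w / 2) * Rpower B (w / 2).
Proof.
  intros. rewrite <- Rpower_sqrt, <- (Rmult_1_r (Rpower N (/ 2))) by lra.
  apply Rmult_le_compat; [left; apply exp_pos | lra | apply Rle_Rpower; lra |].
  apply Rpower_ge_1; lra.
Qed.

Lemma sqrt_vdc_diagonal_term (N n : nat) T :
  (1 <= N)%nat -> 1 <= T -> T ^ 2 / 2 <= INR n ->
  sqrt (2 * INR N ^ 2 / INR (Nat.min n N)) <= 2 * INR N / T + sqrt (2 * INR N).
Proof.
  intros HN HT Hn. assert (HN1 : 1 <= INR N) by (apply (le_INR 1); lia).
  assert (0 <= 2 * INR N / T) by (apply Rdiv_le_0_compat; lra).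
  pose proof (sqrt_pos (2 * INR N)).
  destruct (Nat.le_ge_cases n N) as [Hle|Hge].
  - rewrite Nat.min_l by auto. enough (sqrt (2 * INR N ^ 2 / INR n) <= 2 * INR N / T) by lra.
    rewrite <- (sqrt_pow2 (2 * INR N / T)) by auto. apply sqrt_le_1_alt.
    assert (0 < INR n) by (pose proof (pow_R1_Rle T 2 HT); lra).
    apply Rmult_le_reg_r with (INR n * T ^ 2);
      [apply Rmult_lt_0_compat; [lra | apply pow_lt; lra]|].
    replace (2 * INR N ^ 2 / INR n * (INR n * T ^ 2)) with (2 * INR N ^ 2 * T ^ 2) by (field; lra).
    replace ((2 * INR N / T) ^ 2 * (INR n * T ^ 2)) with (4 * INR N ^ 2 * INR n) by (field; lra).
    nra.
  - rewrite Nat.min_r by auto.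
    replace (2 * INR N ^ 2 / INR N) with (2 * INR N) by (field; lra). lra.
Qed.

Lemma sqrt_vdc_offdiagonal_term N T B K w :
  1 <= N -> 1 <= T -> 1 <= B -> 0 <= K -> 0 < w <= 1 ->
  sqrt (2 * N * (K * (N / T ^ 2 + Rpower N (1 - w) * Rpower B w))) <=
  sqrt (2 * K) * (N / T + Rpower N (1 - w / 2) * Rpower B (w / 2)).
Proof.
  intros. assert (0 <= N / T) by (apply Rdiv_le_0_compat; lra).
  assert (0 <= N * (Rpower N (1 - w) * Rpower B w))
    by (apply Rmult_le_pos; [lra | apply Rmult_le_pos; left; apply exp_pos]).
  replace (2 * N * (K * (N / T ^ 2 + Rpower N (1 - w) * Rpower B w)))
    with (2 * K * ((N / T) ^ 2 + N * (Rpower N (1 - w) * Rpower B w))) by (field; lra).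
  rewrite sqrt_mult by (lra || nra). apply Rmult_le_compat_l; [apply sqrt_pos|].
  eapply Rle_trans; [apply sqrt_plus_le; nra|].
  rewrite sqrt_pow2, sqrt_mul_Rpower by lra. lra.
Qed.

Definition vdc_bound (p : nat) (K : R) : Prop :=
  forall th N T B, 1 <= T -> 1 <= B ->
    (forall rs N', length rs = p -> admissible T rs -> (N' <= N)%nat ->
       Cmod (esum (dlts rs th) N') <= B) ->
    Cmod (esum th N) <= K * (INR N / T + Rpower (INR N) (1 - / 2 ^ p) * Rpower B (/ 2 ^ p)).

Lemma vdc_bound_0 : vdc_bound 0 1.
Proof.
  unfold vdc_bound. intros th N T B HT HB Hbase.
  rewrite pow_O, Rinv_1, Rpower_1 by lra.
  replace (Rpower (INR N) (1 - 1)) with 1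
    by (unfold Rpower; rewrite Rminus_diag, Rmult_0_l; symmetry; apply exp_0).
  specialize (Hbase [] N eq_refl I (le_n N)). simpl in Hbase.
  assert (0 <= INR N / T) by (apply Rdiv_le_0_compat; [apply pos_INR | lra]). lra.
Qed.

Lemma vdc_bound_dlt p K th N T B d :
  0 < K -> vdc_bound p K -> 1 <= T -> 1 <= B ->
  (forall rs N', length rs = S p -> admissible T rs -> (N' <= N)%nat ->
     Cmod (esum (dlts rs th) N') <= B) ->
  (1 <= d < N)%nat -> INR d <= T ^ 2 ->
  Cmod (esum (dlt d th) (N - d)) <=
  K * (INR N / T ^ 2 + Rpower (INR N) (1 - / 2 ^ p) * Rpower B (/ 2 ^ p)).
Proof.
  intros HK Hp HT HB Hbase Hd HdT.
  assert (HT2 : 1 <= T ^ 2) by (apply pow_R1_Rle; lra).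
  eapply Rle_trans; [apply (Hp (dlt d th) (N - d)%nat (T ^ 2) B); auto|].
  - intros rs N' Hlen Hadm HN'. apply (Hbase (d :: rs)); [simpl; lia | | lia].
    repeat split; auto; lia.
  - assert (Hd1 : 1 <= INR (N - d)) by (apply (le_INR 1); lia).
    assert (HdN : INR (N - d) <= INR N) by (apply le_INR; lia).
    pose proof (pow_R1_Rle 2 p ltac:(lra)).
    assert (0 < / 2 ^ p <= 1)
      by (split; [apply Rinv_0_lt_compat; lra | rewrite <- Rinv_1; apply Rinv_le_contravar; lra]).
    apply Rmult_le_compat_l; [lra|]. apply Rplus_le_compat.
    + apply Rmult_le_compat_r; [left; apply Rinv_0_lt_compat|]; lra.
    + apply Rmult_le_compat_r; [left; apply exp_pos|]. apply Rle_Rpower_l; lra.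
Qed.

(* One differencing step, with window length [Q = min (floor (T ^ 2), N)]. *)
Lemma vdc_bound_S p K : 0 < K -> vdc_bound p K -> vdc_bound (S p) (2 + sqrt 2 + sqrt (2 * K)).
Proof.
  intros HK Hp. unfold vdc_bound. intros th N T B HT HB Hbase.
  pose proof (sqrt_pos 2); pose proof (sqrt_pos (2 * K)).
  set (w := / 2 ^ p). assert (Hw : 0 < w <= 1).
  { pose proof (pow_R1_Rle 2 p ltac:(lra)). unfold w.
    split; [apply Rinv_0_lt_compat; lra | rewrite <- Rinv_1; apply Rinv_le_contravar; lra]. }
  replace (/ 2 ^ S p) with (w / 2) by (unfold w; simpl; field; apply pow_nonzero; lra).
  assert (HNT : 0 <= INR N / T) by (apply Rdiv_le_0_compat; [apply pos_INR | lra]).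
  destruct (Nat.eq_dec N 0) as [->|HN0].
  { unfold esum; simpl. rewrite Cmod_0. apply Rmult_le_pos; [lra|].
    apply Rplus_le_le_0_compat; [lra | apply Rmult_le_pos; left; apply exp_pos]. }
  assert (HN1 : 1 <= INR N) by (apply (le_INR 1); lia).
  assert (HT2 : 1 <= T ^ 2) by (apply pow_R1_Rle; lra).
  destruct (exists_nat_between_half (T ^ 2) HT2) as [n [Hn1 Hn]].
  set (B1 := K * (INR N / T ^ 2 + Rpower (INR N) (1 - w) * Rpower B w)).
  assert (HB1 : 0 <= B1).
  { apply Rmult_le_pos; [lra|]. apply Rplus_le_le_0_compat; [apply Rdiv_le_0_compat; lra|].
    apply Rmult_le_pos; left; apply exp_pos. }
  assert (Hdiff : forall d, (1 <= d < Nat.min n N)%nat -> Cmod (esum (dlt d th) (N - d)) <= B1).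
  { intros d Hd. apply (vdc_bound_dlt p K th N T B d); auto; [lia|].
    apply Rle_trans with (INR n); [apply le_INR; lia | lra]. }
  pose proof (weyl_van_der_corput th N (Nat.min n N) B1 ltac:(lia) HB1 Hdiff) as Hvdc.
  apply Cmod_le_sqrt_plus in Hvdc;
    [| apply Rdiv_le_0_compat; [nra | apply lt_0_INR; lia] | apply Rmult_le_pos; lra].
  pose proof (sqrt_vdc_diagonal_term N n T ltac:(lia) HT (proj1 Hn)).
  pose proof (sqrt_vdc_offdiagonal_term (INR N) T B K w HN1 HT HB ltac:(lra) Hw).
  pose proof (sqrt_le_Rpower (INR N) B w HN1 HB ltac:(lra)).
  set (Y := Rpower (INR N) (1 - w / 2) * Rpower B (w / 2)) in *.
  assert (HY : 0 <= Y) by (apply Rmult_le_pos; left; apply exp_pos).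
  rewrite (sqrt_mult 2 (INR N)) in * by lra.
  replace (2 * INR N / T) with (2 * (INR N / T)) in * by (unfold Rdiv; ring).
  assert (sqrt 2 * sqrt (INR N) <= sqrt 2 * Y) by (apply Rmult_le_compat_l; lra).
  assert (0 <= sqrt 2 * (INR N / T)) by (apply Rmult_le_pos; lra).
  unfold B1 in Hvdc. lra.
Qed.

Lemma weyl_van_der_corput_iterated p : exists K, 0 < K /\ vdc_bound p K.
Proof.
  induction p as [|p [K [HK Hp]]].
  - exists 1. split; [lra | apply vdc_bound_0].
  - exists (2 + sqrt 2 + sqrt (2 * K)). split; [|now apply vdc_bound_S].
    pose proof (sqrt_pos 2); pose proof (sqrt_pos (2 * K)). lra.
Qed.

(** * Finite differences and the Newton expansion *)

Definition rdlt (r : nat) (f : R -> R) (x : R) : R := f (x + INR r) - f x.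

Fixpoint rdlts (rs : list nat) (f : R -> R) : R -> R :=
  match rs with [] => f | r :: rs' => rdlts rs' (rdlt r f) end.

Definition steps_prod (rs : list nat) : R := fold_right (fun r acc => INR r * acc) 1 rs.

Lemma rdlts_ext rs f g : (forall y, f y = g y) -> forall x, rdlts rs f x = rdlts rs g x.
Proof.
  revert f g; induction rs as [|r rs IH]; simpl; intros f g H x; auto.
  apply IH. intros y. unfold rdlt. now rewrite !H.
Qed.

Lemma derivable_pt_lim_shift f x c l :
  derivable_pt_lim f (x + c) l -> derivable_pt_lim (fun y => f (y + c)) x l.
Proof.
  intros Hf. replace l with (l * (1 + 0)) by ring.
  apply (derivable_pt_lim_comp (fun y => y + c) f x (1 + 0) l); auto.
  apply (derivable_pt_lim_plus id (fct_cte c)).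
  - apply derivable_pt_lim_id.
  - apply derivable_pt_lim_const.
Qed.

Lemma rdlts_mvt rs (phi : nat -> R -> R) x :
  (forall j y, 0 < y -> derivable_pt_lim (phi j) y (phi (S j) y)) -> 0 < x ->
  exists xi, x <= xi <= x + INR (list_sum rs) /\
             rdlts rs (phi O) x = steps_prod rs * phi (length rs) xi.
Proof.
  revert phi; induction rs as [|r rs IH]; intros phi Hd Hx.
  - exists x. simpl. split; [lra | ring].
  - set (psi j := rdlt r (phi j)).
    assert (Hpsi : forall j y, 0 < y -> derivable_pt_lim (psi j) y (psi (S j) y)).
    { intros j y Hy. apply (derivable_pt_lim_minus (fun y => phi j (y + INR r)) (phi j)).
      - apply derivable_pt_lim_shift, Hd. pose proof (pos_INR r). lra.
      - now apply Hd. }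
    destruct (IH psi Hpsi Hx) as [xi [Hxi Heq]].
    simpl rdlts. fold (psi O). rewrite Heq. unfold psi, rdlt.
    destruct (Nat.eq_dec r 0) as [->|Hr].
    + exists xi. simpl. rewrite Rplus_0_r. split; [lra | ring].
    + assert (Hr' : 0 < INR r) by (apply lt_0_INR; lia).
      destruct (MVT_cor2 (phi (length rs)) (phi (S (length rs))) xi (xi + INR r))
        as [eta [He Heta]]; [lra | intros; apply Hd; lra |].
      exists eta. simpl list_sum. rewrite plus_INR. split; [lra|].
      rewrite He. simpl. ring.
Qed.

Fixpoint binom (n k : nat) : nat :=
  match n, k with
  | _, O => 1%nat
  | O, S _ => 0%nat
  | S n', S k' => (binom n' k' + binom n' (S k'))%nat
  end.

Lemma binom_lt n k : (n < k)%nat -> binom n k = 0%nat.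
Proof.
  revert k; induction n as [|n IH]; intros [|k] Hk; simpl; try lia; auto.
  rewrite !IH by lia. reflexivity.
Qed.

Lemma binom_diag n : binom n n = 1%nat.
Proof. induction n as [|n IH]; simpl; auto. rewrite IH, binom_lt by lia. reflexivity. Qed.

Definition fdiff (k : nat) (f : R -> R) : R -> R := rdlts (repeat 1%nat k) f.

Lemma rdlts_rdlt rs f r x : rdlts rs (rdlt r f) x = rdlts rs f (x + INR r) - rdlts rs f x.
Proof.
  revert f; induction rs as [|r' rs IH]; intros f; simpl; auto.
  rewrite (rdlts_ext rs (rdlt r' (rdlt r f)) (rdlt r (rdlt r' f))).
  - apply IH.
  - intros y. unfold rdlt. replace (y + INR r' + INR r) with (y + INR r + INR r') by ring. ring.
Qed.

Lemma fdiff_S k f x : fdiff (S k) f x = fdiff k f (x + 1) - fdiff k f x.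
Proof. unfold fdiff. simpl. now rewrite rdlts_rdlt. Qed.

Lemma newton_forward l f x :
  f (x + INR l) = rsum (fun k => INR (binom l k) * fdiff k f x) (S l).
Proof.
  revert f x; induction l as [|l IH]; intros f x.
  - simpl. unfold fdiff. simpl. rewrite Rplus_0_r. ring.
  - replace (x + INR (S l)) with (x + 1 + INR l) by (rewrite S_INR; ring).
    rewrite IH.
    rewrite (rsum_ext _
               (fun k => INR (binom l k) * fdiff k f x + INR (binom l k) * fdiff (S k) f x))
      by (intros; rewrite fdiff_S; ring).
    rewrite rsum_plus, !(rsum_shift (fun k => INR (binom _ k) * fdiff k f x)).
    rewrite (rsum_ext (fun i => INR (binom (S l) (S i)) * fdiff (S i) f x)
               (fun i => INR (binom l i) * fdiff (S i) f x + INR (binom l (S i)) * fdiff (S i) f x))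
      by (intros; simpl binom; rewrite plus_INR; ring).
    rewrite rsum_plus. cbn [rsum]. rewrite (binom_lt l (S l)) by lia.
    replace (binom l 0) with 1%nat by (destruct l; auto). simpl binom. simpl INR. ring.
Qed.

Fixpoint ffact (b : R) (k : nat) : R :=
  match k with O => 1 | S k' => ffact b k' * (b - INR k') end.

Definition power_deriv (b : R) (j : nat) (t : R) : R := ffact b j * Rpower t (b - INR j).

Lemma power_deriv_spec b j t :
  0 < t -> derivable_pt_lim (power_deriv b j) t (power_deriv b (S j) t).
Proof.
  intros Ht. unfold power_deriv.
  replace (ffact b (S j) * Rpower t (b - INR (S j)))
    with (ffact b j * ((b - INR j) * Rpower t (b - INR j - 1)))
    by (rewrite S_INR; simpl; replace (b - (INR j + 1)) with (b - INR j - 1) by ring; ring).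
  apply (derivable_pt_lim_scal (fun y => Rpower y (b - INR j))).
  now apply derivable_pt_lim_power.
Qed.

Lemma fdiff_power_mvt b k x :
  0 < x -> exists xi, x <= xi <= x + INR k /\
    fdiff k (fun t => Rpower t b) x = ffact b k * Rpower xi (b - INR k).
Proof.
  intros Hx.
  assert (Hsum : list_sum (repeat 1%nat k) = k) by (clear; induction k; simpl; lia).
  assert (Hprod : steps_prod (repeat 1%nat k) = 1) by (clear; induction k; simpl; lra).
  destruct (rdlts_mvt (repeat 1%nat k) (power_deriv b) x) as [xi [Hxi Heq]];
    auto using power_deriv_spec.
  rewrite Hsum in Hxi. exists xi. split; auto. unfold fdiff.
  rewrite (rdlts_ext _ _ (power_deriv b 0))
    by (intros; unfold power_deriv; simpl; now rewrite Rminus_0_r, Rmult_1_l).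
  rewrite Heq, repeat_length, Hprod. unfold power_deriv. ring.
Qed.

Lemma exp_le_compat x y : x <= y -> exp x <= exp y.
Proof. intros [H | ->]; [left; now apply exp_increasing | lra]. Qed.

Lemma Rpower_ratio_bounds (L : nat) a x xi :
  1 <= x -> x <= xi <= x + INR L ->
  exists t, Rpower xi a = Rpower x a * t /\
            / Rpower (1 + INR L) (Rabs a) <= t <= Rpower (1 + INR L) (Rabs a).
Proof.
  intros Hx Hxi. exists (Rpower (xi / x) a). split.
  - assert (0 < xi / x) by (apply Rdiv_lt_0_compat; lra).
    rewrite Rpower_mult_distr by lra. f_equal. field. lra.
  - assert (Hq : 1 <= xi / x <= 1 + INR L).
    { split; apply Rmult_le_reg_r with x; try lra; field_simplify; pose proof (pos_INR L); nra. }
    assert (0 <= ln (xi / x)) by (rewrite <- ln_1; apply ln_le; lra).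
    assert (ln (xi / x) <= ln (1 + INR L)) by (apply ln_le; lra).
    assert (Habs : Rabs (a * ln (xi / x)) <= Rabs a * ln (1 + INR L)).
    { rewrite Rabs_mult, (Rabs_pos_eq (ln (xi / x))) by lra.
      apply Rmult_le_compat_l; [apply Rabs_pos | auto]. }
    apply Rabs_le_between in Habs. unfold Rpower. rewrite <- exp_Ropp.
    split; apply exp_le_compat; lra.
Qed.

Lemma fdiff_power_eq (L : nat) b k x :
  (k <= L)%nat -> 1 <= x ->
  exists t, fdiff k (fun t => Rpower t b) x = ffact b k * Rpower x (b - INR k) * t /\
            / Rpower (1 + INR L) (Rabs (b - INR k)) <= t <= Rpower (1 + INR L) (Rabs (b - INR k)).
Proof.
  intros Hk Hx. destruct (fdiff_power_mvt b k x) as [xi [Hxi ->]]; [lra|].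
  assert (INR k <= INR L) by (now apply le_INR).
  destruct (Rpower_ratio_bounds L (b - INR k) x xi Hx) as [t [-> Ht]]; [lra|].
  exists t. split; [ring | auto].
Qed.

Lemma fdiff_power_bounds (L : nat) b k x :
  (k <= L)%nat -> 1 <= x ->
  Rabs (ffact b k) / Rpower (1 + INR L) (Rabs (b - INR k)) * Rpower x (b - INR k) <=
  Rabs (fdiff k (fun t => Rpower t b) x) <=
  Rabs (ffact b k) * Rpower (1 + INR L) (Rabs (b - INR k)) * Rpower x (b - INR k) /\
  0 <= ffact b k * fdiff k (fun t => Rpower t b) x.
Proof.
  intros Hk Hx. destruct (fdiff_power_eq L b k x Hk Hx) as [t [-> Ht]].
  set (rho := Rpower (1 + INR L) (Rabs (b - INR k))) in *.
  set (X := Rpower x (b - INR k)). set (P := ffact b k).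
  assert (0 < / rho) by (apply Rinv_0_lt_compat, exp_pos).
  assert (HX : 0 < X) by apply exp_pos.
  assert (HPX : 0 <= Rabs P * X) by (apply Rmult_le_pos; [apply Rabs_pos | lra]).
  rewrite !Rabs_mult, (Rabs_pos_eq X), (Rabs_pos_eq t) by lra.
  split; [split|].
  - replace (Rabs P / rho * X) with (Rabs P * X * / rho) by (unfold Rdiv; ring).
    apply Rmult_le_compat_l; lra.
  - replace (Rabs P * rho * X) with (Rabs P * X * rho) by ring.
    apply Rmult_le_compat_l; lra.
  - replace (P * (P * X * t)) with (P * P * (X * t)) by ring.
    apply Rmult_le_pos; [apply Rle_0_sqr | nra].
Qed.

(** * The leading Newton coefficient *)

Definition newton_coef (L : nat) (h : nat -> Z) (k : nat) : R :=
  rsum (fun l => IZR (h l) * INR (binom l k)) L.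

Definition hpow (L : nat) (h : nat -> Z) (b x : R) : R :=
  rsum (fun l => IZR (h l) * Rpower (x + INR l) b) L.

Definition leading_index (L : nat) (h : nat -> Z) (k0 : nat) : Prop :=
  newton_coef L h k0 <> 0 /\ forall k, (k < k0)%nat -> newton_coef L h k = 0.

Lemma hpow_newton L h b x :
  hpow L h b x = rsum (fun k => newton_coef L h k * fdiff k (fun t => Rpower t b) x) L.
Proof.
  unfold hpow, newton_coef.
  rewrite (rsum_ext _ (fun l => rsum (fun k =>
             IZR (h l) * INR (binom l k) * fdiff k (fun t => Rpower t b) x) L)).
  - rewrite rsum_swap. apply rsum_ext; intros k _.
    rewrite Rmult_comm, <- rsum_scal. apply rsum_ext; intros; ring.
  - intros l Hl. rewrite (newton_forward l (fun t => Rpower t b)), <- rsum_scal.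
    rewrite (rsum_extend _ (S l) L); [apply rsum_ext; intros; ring | lia |].
    intros k Hk. rewrite binom_lt by lia. simpl. ring.
Qed.

Lemma newton_coef_int L h k : exists z, newton_coef L h k = IZR z.
Proof.
  induction L as [|L [z Hz]]; [now exists 0%Z|].
  exists (z + h L * Z.of_nat (binom L k))%Z. unfold newton_coef in *. simpl.
  now rewrite Hz, plus_IZR, mult_IZR, <- INR_IZR_INZ.
Qed.

Lemma Rabs_newton_coef_ge_1 L h k : newton_coef L h k <> 0 -> 1 <= Rabs (newton_coef L h k).
Proof.
  destruct (newton_coef_int L h k) as [z ->]. intros Hz.
  rewrite <- abs_IZR. apply IZR_le.
  assert (z <> 0%Z) by (intros ->; now apply Hz). lia.
Qed.

Lemma newton_coef_all_zero L h :
  (forall k, (k < L)%nat -> newton_coef L h k = 0) -> forall l, (l < L)%nat -> h l = 0%Z.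
Proof.
  intros H. assert (Hd : forall d j, (L - d <= j < L)%nat -> IZR (h j) = 0).
  { induction d as [|d IH]; intros j Hj; [lia|].
    destruct (Nat.eq_dec j (L - S d)) as [->|]; [|apply IH; lia].
    pose proof (H (L - S d)%nat ltac:(lia)) as Hb. unfold newton_coef in Hb.
    rewrite (rsum_single _ _ (L - S d)), binom_diag, Rmult_1_r in Hb; auto; [lia|].
    intros l Hl Hl'. destruct (Nat.lt_ge_cases l (L - S d)).
    - rewrite binom_lt by lia. simpl. ring.
    - rewrite IH by lia. ring. }
  intros l Hl. apply eq_IZR, (Hd L). lia.
Qed.

Lemma leading_index_exists L h :
  (exists l, (l < L)%nat /\ h l <> 0%Z) -> exists k0, (k0 < L)%nat /\ leading_index L h k0.
Proof.
  intros [l [Hl Hh]].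
  destruct (dec_inh_nat_subset_has_unique_least_element
              (fun k => (k < L)%nat /\ newton_coef L h k <> 0)) as [k0 [[[Hk0 Hnz] Hmin] _]].
  - intros k. destruct (lt_dec k L), (Req_dec (newton_coef L h k) 0); tauto.
  - apply NNPP. intros Hnone. apply Hh. apply (newton_coef_all_zero L h); auto.
    intros k Hk. apply NNPP. intros Hk'. apply Hnone. now exists k.
  - exists k0. split; [auto | split; auto]. intros k Hk. apply NNPP. intros Hk'.
    specialize (Hmin k ltac:(split; [lia | auto])). lia.
Qed.

Lemma Rabs_newton_coef_le L h H k :
  (forall l, (l < L)%nat -> Rabs (IZR (h l)) <= H) ->
  Rabs (newton_coef L h k) <= H * rsum (fun l => INR (binom l k)) L.
Proof.
  intros Hh. unfold newton_coef. eapply Rle_trans; [apply Rabs_rsum_le|].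
  rewrite <- rsum_scal. apply rsum_le; intros l Hl.
  rewrite Rabs_mult, (Rabs_pos_eq (INR _)) by apply pos_INR.
  apply Rmult_le_compat_r; [apply pos_INR | auto].
Qed.

Lemma hpow_split L h b k0 x :
  (k0 < L)%nat -> leading_index L h k0 ->
  hpow L h b x = newton_coef L h k0 * fdiff k0 (fun t => Rpower t b) x +
    rsum (fun i => newton_coef L h (k0 + S i) * fdiff (k0 + S i) (fun t => Rpower t b) x)
         (L - S k0).
Proof.
  intros Hk0 [_ Hz]. rewrite hpow_newton.
  set (f k := newton_coef L h k * fdiff k (fun t => Rpower t b) x).
  replace (rsum f L) with (rsum f (k0 + S (L - S k0))) by (f_equal; lia).
  rewrite rsum_split, rsum_shift, rsum_zero, Nat.add_0_r
    by (intros; unfold f; rewrite Hz by auto; ring).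
  unfold f. cbv beta. ring.
Qed.

Lemma hpow_tail_le L b k0 :
  exists E, 0 <= E /\ forall h H x,
    (forall l, (l < L)%nat -> Rabs (IZR (h l)) <= H) -> 1 <= x ->
    Rabs (rsum (fun i => newton_coef L h (k0 + S i) * fdiff (k0 + S i) (fun t => Rpower t b) x)
               (L - S k0)) <= H * E * Rpower x (b - INR k0 - 1).
Proof.
  set (c k := rsum (fun l => INR (binom l k)) L * Rabs (ffact b k) *
              Rpower (1 + INR L) (Rabs (b - INR k))).
  assert (Hc : forall k, 0 <= c k).
  { intros k. apply Rmult_le_pos; [apply Rmult_le_pos; [|apply Rabs_pos]|left; apply exp_pos].
    apply rsum_nonneg; intros; apply pos_INR. }
  exists (rsum (fun i => c (k0 + S i)%nat) (L - S k0)). split; [now apply rsum_nonneg|].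
  intros h H x Hh Hx. eapply Rle_trans; [apply Rabs_rsum_le|].
  apply Rle_trans with
    (rsum (fun i => H * c (k0 + S i)%nat * Rpower x (b - INR k0 - 1)) (L - S k0)).
  2:{ right. rewrite <- rsum_scal, <- Rmult_comm, <- rsum_scal.
      apply rsum_ext; intros; ring. }
  apply rsum_le; intros i Hi. set (k := (k0 + S i)%nat).
  assert (HH : 0 <= H) by (eapply Rle_trans; [apply Rabs_pos | apply (Hh 0%nat); lia]).
  assert (Hxk : Rpower x (b - INR k) <= Rpower x (b - INR k0 - 1)).
  { apply Rle_Rpower; auto. unfold k. rewrite plus_INR, S_INR. pose proof (pos_INR i). lra. }
  rewrite Rabs_mult.
  apply Rle_trans with ((H * rsum (fun l => INR (binom l k)) L) *
    (Rabs (ffact b k) * Rpower (1 + INR L) (Rabs (b - INR k)) * Rpower x (b - INR k))).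
  - apply Rmult_le_compat; try apply Rabs_pos; [now apply Rabs_newton_coef_le|].
    apply (proj2 (proj1 (fdiff_power_bounds L b k x ltac:(unfold k; lia) Hx))).
  - replace (H * rsum (fun l => INR (binom l k)) L *
             (Rabs (ffact b k) * Rpower (1 + INR L) (Rabs (b - INR k)) * Rpower x (b - INR k)))
      with (H * c k * Rpower x (b - INR k)) by (unfold c; ring).
    apply Rmult_le_compat_l; [apply Rmult_le_pos |]; auto.
Qed.

Lemma hpow_tail_small L b k0 eta :
  0 < eta -> exists delta, 0 < delta /\ forall h H x,
    (forall l, (l < L)%nat -> Rabs (IZR (h l)) <= H) -> 1 <= x -> H <= delta * x ->
    Rabs (rsum (fun i => newton_coef L h (k0 + S i) * fdiff (k0 + S i) (fun t => Rpower t b) x)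
               (L - S k0)) <= eta * Rpower x (b - INR k0).
Proof.
  intros Heta. destruct (hpow_tail_le L b k0) as [E [HE Htail]].
  exists (eta / (E + 1)). split; [apply Rdiv_lt_0_compat; lra|].
  intros h H x Hh Hx HHx. eapply Rle_trans; [apply Htail; auto|].
  set (X1 := Rpower x (b - INR k0 - 1)).
  assert (HX1 : X1 * x = Rpower x (b - INR k0))
    by (unfold X1; rewrite <- (Rpower_1 x) at 2 by lra; rewrite <- Rpower_plus; f_equal; ring).
  assert (HX1' : 0 < X1) by apply exp_pos.
  apply Rle_trans with (eta / (E + 1) * x * (E * X1)).
  { rewrite Rmult_assoc. apply Rmult_le_compat_r; [apply Rmult_le_pos|]; lra. }
  rewrite <- HX1.
  replace (eta / (E + 1) * x * (E * X1)) with (eta * (X1 * x) * (E / (E + 1))) by (field; lra).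
  rewrite <- (Rmult_1_r (eta * (X1 * x))) at 2.
  apply Rmult_le_compat_l; [apply Rmult_le_pos; [|apply Rmult_le_pos]; lra|].
  apply Rmult_le_reg_r with (E + 1); [lra|]. unfold Rdiv. rewrite Rmult_assoc, Rinv_l; lra.
Qed.

Lemma perturbation_bounds a e :
  a <> 0 -> Rabs e <= Rabs a / 2 ->
  0 < a * (a + e) /\ Rabs a / 2 <= Rabs (a + e) <= 3 / 2 * Rabs a.
Proof.
  intros Ha He. apply Rabs_le_between in He. destruct (Rlt_or_le 0 a) as [Hp|Hn].
  - rewrite Rabs_pos_eq in * by lra. rewrite Rabs_pos_eq by lra. split; [nra | lra].
  - assert (a < 0) by (destruct Hn; [auto | contradiction]).
    rewrite Rabs_left in * by lra. rewrite Rabs_left by lra. split; [nra | lra].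
Qed.

Lemma hpow_leading_term L b k0 :
  (k0 < L)%nat -> ffact b k0 <> 0 ->
  exists delta kappa1 kappa2, 0 < delta /\ 0 < kappa1 /\ 0 < kappa2 /\
  forall h H x, leading_index L h k0 -> (forall l, (l < L)%nat -> Rabs (IZR (h l)) <= H) ->
    1 <= x -> H <= delta * x ->
    0 < newton_coef L h k0 * ffact b k0 * hpow L h b x /\
    kappa1 * Rpower x (b - INR k0) <= Rabs (hpow L h b x) <= kappa2 * H * Rpower x (b - INR k0).
Proof.
  intros Hk0 HP.
  set (P := ffact b k0) in *.
  set (rho := Rpower (1 + INR L) (Rabs (b - INR k0))).
  set (ell := Rabs P / rho).
  set (beta := rsum (fun l => INR (binom l k0)) L).
  assert (Hrho : 0 < rho) by apply exp_pos.
  assert (Hell : 0 < ell) by (apply Rdiv_lt_0_compat; [now apply Rabs_pos_lt | lra]).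
  assert (Hbeta : 1 <= beta).
  { unfold beta. replace 1 with (INR (binom k0 k0)) by now rewrite binom_diag.
    apply (rsum_ge_term (fun l => INR (binom l k0))); auto using pos_INR. }
  destruct (hpow_tail_small L b k0 (ell / 2)) as [delta [Hdelta Htail]]; [lra|].
  exists delta, (ell / 2), (3 / 2 * beta * Rabs P * rho).
  split; [lra|]. split; [lra|].
  split; [apply Rmult_lt_0_compat; [|lra]; apply Rmult_lt_0_compat; [lra | now apply Rabs_pos_lt]|].
  intros h H x Hlead Hh Hx HHx.
  set (B := newton_coef L h k0).
  assert (HB1 : 1 <= Rabs B) by (apply Rabs_newton_coef_ge_1, Hlead).
  assert (HBH : Rabs B <= H * beta) by (apply Rabs_newton_coef_le; auto).
  set (X := Rpower x (b - INR k0)).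
  assert (HX : 0 < X) by apply exp_pos.
  set (D := fdiff k0 (fun t => Rpower t b) x).
  destruct (fdiff_power_bounds L b k0 x ltac:(lia) Hx) as [[HDlo HDhi] HPD].
  fold P rho X D ell in HDlo, HDhi, HPD.
  pose proof (Htail h H x Hh Hx HHx) as Htl. fold X in Htl.
  rewrite (hpow_split L h b k0 x Hk0 Hlead). fold B D.
  set (tail := rsum _ (L - S k0)) in *.
  assert (HD : 0 < Rabs D) by nra.
  assert (HBD : Rabs D <= Rabs B * Rabs D) by nra.
  assert (HB0 : B <> 0) by (intros E; rewrite E, Rabs_R0 in HB1; lra).
  assert (HD0 : D <> 0) by (intros E; rewrite E, Rabs_R0 in HD; lra).
  assert (Htl' : Rabs tail <= Rabs (B * D) / 2) by (rewrite Rabs_mult; nra).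
  destruct (perturbation_bounds (B * D) tail) as [Hs [Hlo Hhi]];
    [now apply Rmult_integral_contrapositive | auto |].
  rewrite Rabs_mult in Hlo, Hhi. split; [|split].
  - assert (HPD' : 0 < P * D).
    { destruct HPD as [|E]; auto. exfalso. apply (Rmult_integral_contrapositive P D); auto. }
    replace (B * P * (B * D + tail)) with (P * D * (B * D * (B * D + tail)) / (D * D))
      by (field; lra).
    apply Rdiv_lt_0_compat; [nra|]. destruct (Rlt_or_le 0 D); nra.
  - nra.
  - apply Rle_trans with (3 / 2 * (Rabs B * Rabs D)); [lra|].
    replace (3 / 2 * beta * Rabs P * rho * H * X) with (3 / 2 * (H * beta * (Rabs P * rho * X)))
      by ring.
    apply Rmult_le_compat_l; [lra|]. apply Rmult_le_compat; auto using Rabs_pos.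
Qed.

(** * Differenced sums of a smooth phase *)

Lemma dlts_ext rs th1 th2 : (forall n, th1 n = th2 n) -> forall n, dlts rs th1 n = dlts rs th2 n.
Proof.
  revert th1 th2; induction rs as [|r rs IH]; simpl; intros th1 th2 H n; auto.
  apply IH. intros k. unfold dlt. now rewrite !H.
Qed.

Lemma dlts_sample rs F x0 n :
  dlts rs (fun k => F (x0 + INR k)) n = rdlts rs F (x0 + INR n).
Proof.
  revert F n; induction rs as [|r rs IH]; intros F n; simpl; auto.
  rewrite (dlts_ext rs _ (fun k => rdlt r F (x0 + INR k))); [apply IH|].
  intros k. unfold dlt, rdlt. now rewrite plus_INR, Rplus_assoc.
Qed.

Lemma dlts_app rs rs' th n : dlts (rs ++ rs') th n = dlts rs' (dlts rs th) n.
Proof. revert th; induction rs; simpl; auto. Qed.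

Lemma steps_prod_app rs rs' : steps_prod (rs ++ rs') = steps_prod rs * steps_prod rs'.
Proof.
  induction rs as [|r rs IH]; simpl; [ring|]. unfold steps_prod in *. simpl. rewrite IH. ring.
Qed.

Lemma admissible_bounds rs T :
  1 <= T -> admissible T rs ->
  1 <= steps_prod rs <= T ^ (2 ^ S (length rs) - 2) /\
  INR (list_sum rs) <= INR (length rs) * T ^ (2 ^ length rs).
Proof.
  revert T; induction rs as [|r rs IH]; intros T HT Hadm; [simpl; lra|].
  destruct Hadm as [Hr1 [Hr2 Hadm]].
  assert (HT2 : 1 <= T ^ 2) by (apply pow_R1_Rle; lra).
  destruct (IH (T ^ 2) HT2 Hadm) as [[H1 H2] H3].
  assert (HINR : 1 <= INR r) by (apply (le_INR 1); auto).
  change (steps_prod (r :: rs)) with (INR r * steps_prod rs).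
  change (list_sum (r :: rs)) with (r + list_sum rs)%nat.
  change (length (r :: rs)) with (S (length rs)). rewrite plus_INR, S_INR.
  rewrite <- !pow_mult in H2, H3. set (l := length rs) in *.
  split; [split|].
  - rewrite <- (Rmult_1_l 1). apply Rmult_le_compat; lra.
  - replace (2 ^ S (S l) - 2)%nat with (2 + 2 * (2 ^ S l - 2))%nat
      by (simpl; pose proof (Nat.pow_nonzero 2 l); lia).
    rewrite pow_add. apply Rmult_le_compat; lra.
  - replace (2 * 2 ^ l)%nat with (2 ^ S l)%nat in H3 by (simpl; lia).
    assert (T ^ 2 <= T ^ (2 ^ S l))
      by (apply Rle_pow; auto; simpl; pose proof (Nat.pow_nonzero 2 l); lia).
    pose proof (pos_INR l). nra.
Qed.

Definition sign_constant_on (f : R -> R) (a b : R) : Prop :=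
  (forall y, a <= y <= b -> 0 < f y) \/ (forall y, a <= y <= b -> f y < 0).

Lemma sign_constant_on_mul (f : R -> R) s a b :
  (forall y, a <= y <= b -> 0 < s * f y) -> sign_constant_on f a b.
Proof.
  intros H. destruct (Rlt_or_le 0 s) as [Hs|Hs]; [left|right]; intros y Hy; specialize (H y Hy).
  - destruct (Rlt_or_le 0 (f y)); nra.
  - destruct (Rlt_or_le (f y) 0); nra.
Qed.

Lemma dlts_sample_mvt (F : nat -> R -> R) rs rs' x0 n :
  (forall j y, 0 < y -> derivable_pt_lim (F j) y (F (S j) y)) -> 0 < x0 ->
  exists y, x0 + INR n <= y <= x0 + INR n + INR (list_sum rs) + INR (list_sum rs') /\
    dlts rs' (dlts rs (fun k => F O (x0 + INR k))) n =
    steps_prod rs * steps_prod rs' * F (length rs + length rs')%nat y.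
Proof.
  intros Hd Hx0. rewrite <- dlts_app, dlts_sample.
  destruct (rdlts_mvt (rs ++ rs') F (x0 + INR n) Hd) as [y [Hy ->]]; [pose proof (pos_INR n); lra|].
  rewrite list_sum_app, plus_INR in Hy. exists y.
  rewrite steps_prod_app, length_app. split; [lra | ring].
Qed.

(* The first and second differences of the differenced samples are [steps_prod rs]
   times values of [F (S (length rs))] and [F (S (S (length rs)))]. *)
Lemma kusmin_landau_differenced (F : nat -> R -> R) rs x0 xmax N' l Lam :
  (forall j y, 0 < y -> derivable_pt_lim (F j) y (F (S j) y)) -> 0 < x0 ->
  1 <= steps_prod rs -> steps_prod rs * Lam <= / 2 -> 0 < l <= / 2 ->
  x0 + INR N' + INR (list_sum rs) <= xmax ->
  (forall y, x0 <= y <= xmax -> l <= Rabs (F (S (length rs)) y) <= Lam) ->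
  sign_constant_on (F (S (length rs))) x0 xmax ->
  sign_constant_on (F (S (S (length rs)))) x0 xmax ->
  Cmod (esum (dlts rs (fun n => F O (x0 + INR n))) N') <= 4 / l.
Proof.
  intros Hd Hx0 Hp1 HpL Hl Hx Habs Hs1 Hs2.
  set (phi := dlts rs (fun n => F O (x0 + INR n))).
  assert (Hin : forall n k, (n + k <= N')%nat -> x0 + INR n + INR (list_sum rs) + INR k <= xmax).
  { intros n k Hnk. assert (INR n + INR k <= INR N') by (rewrite <- plus_INR; now apply le_INR).
    lra. }
  assert (Hfirst : forall i, (S i < N')%nat -> exists y, x0 <= y <= xmax /\
                     phi (S i) - phi i = steps_prod rs * F (S (length rs)) y).
  { intros i Hi. destruct (dlts_sample_mvt F rs [1%nat] x0 i Hd Hx0) as [y [Hy E]].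
    pose proof (Hin i 1%nat ltac:(lia)). pose proof (pos_INR i).
    change (list_sum [1%nat]) with 1%nat in Hy.
    exists y. split; [lra|]. simpl in E. unfold dlt in E.
    rewrite Nat.add_1_r, Nat.add_1_r in E. fold phi in E.
    rewrite E. unfold steps_prod. simpl. ring. }
  assert (Hsecond : forall i, (S (S i) < N')%nat -> exists y, x0 <= y <= xmax /\
    (phi (S (S i)) - phi (S i)) - (phi (S i) - phi i) = steps_prod rs * F (S (S (length rs))) y).
  { intros i Hi. destruct (dlts_sample_mvt F rs [1%nat; 1%nat] x0 i Hd Hx0) as [y [Hy E]].
    pose proof (Hin i 2%nat ltac:(lia)). pose proof (pos_INR i).
    change (list_sum [1%nat; 1%nat]) with 2%nat in Hy.
    exists y. split; [lra|]. simpl in E. unfold dlt in E.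
    replace (i + 1 + 1)%nat with (S (S i)) in E by lia. rewrite Nat.add_1_r in E.
    fold phi in E. rewrite E. replace (length rs + 2)%nat with (S (S (length rs))) by lia.
    unfold steps_prod. simpl. ring. }
  apply kusmin_landau_sym; auto.
  - destruct Hs1 as [Hs1|Hs1]; [left|right]; intros i Hi;
      destruct (Hfirst i Hi) as [y [Hy E]]; specialize (Habs y Hy); specialize (Hs1 y Hy).
    + rewrite E. rewrite Rabs_pos_eq in Habs by lra. split; nra.
    + replace (phi i - phi (S i)) with (- (phi (S i) - phi i)) by ring.
      rewrite E. rewrite Rabs_left in Habs by lra. split; nra.
  - destruct Hs2 as [Hs2|Hs2]; [left|right]; intros i Hi;
      destruct (Hsecond i Hi) as [y [Hy E]]; specialize (Hs2 y Hy); nra.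
Qed.

(** * The phase of the exponential sum *)

Lemma derivable_pt_lim_rsum (f : nat -> R -> R) (f' : nat -> R) x n :
  (forall i, (i < n)%nat -> derivable_pt_lim (f i) x (f' i)) ->
  derivable_pt_lim (fun y => rsum (fun i => f i y) n) x (rsum f' n).
Proof.
  induction n as [|n IH]; intros H; simpl.
  - apply derivable_pt_lim_const.
  - apply (derivable_pt_lim_plus (fun y => rsum (fun i => f i y) n) (f n));
      [apply IH; intros; apply H | apply H]; lia.
Qed.

Lemma hpow_deriv L h b x :
  0 < x -> derivable_pt_lim (hpow L h b) x (b * hpow L h (b - 1) x).
Proof.
  intros Hx. unfold hpow. rewrite <- rsum_scal.
  apply (derivable_pt_lim_rsum (fun l y => IZR (h l) * Rpower (y + INR l) b)). intros l Hl.
  replace (b * (IZR (h l) * Rpower (x + INR l) (b - 1)))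
    with (IZR (h l) * (b * Rpower (x + INR l) (b - 1))) by ring.
  apply (derivable_pt_lim_scal (fun y => Rpower (y + INR l) b)).
  apply (derivable_pt_lim_shift (fun y => Rpower y b)), derivable_pt_lim_power.
  pose proof (pos_INR l). lra.
Qed.

(* [phase c m L h j] is the [j]-th derivative of [x |-> (1/m) sum_(l<L) h_l (x + l)^c]. *)
Definition phase (c : R) (m L : nat) (h : nat -> Z) (j : nat) (x : R) : R :=
  / INR m * ffact c j * hpow L h (c - INR j) x.

Lemma phase_deriv c m L h j x :
  0 < x -> derivable_pt_lim (phase c m L h j) x (phase c m L h (S j) x).
Proof.
  intros Hx. unfold phase.
  replace (/ INR m * ffact c (S j) * hpow L h (c - INR (S j)) x)
    with (/ INR m * ffact c j * ((c - INR j) * hpow L h (c - INR j - 1) x))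
    by (rewrite S_INR; simpl; replace (c - (INR j + 1)) with (c - INR j - 1) by ring; ring).
  apply (derivable_pt_lim_scal (hpow L h (c - INR j))). now apply hpow_deriv.
Qed.

Lemma phase_sign_constant c m L h j s a b :
  (0 < m)%nat -> ffact c j <> 0 ->
  (forall y, a <= y <= b -> 0 < s * hpow L h (c - INR j) y) ->
  sign_constant_on (phase c m L h j) a b.
Proof.
  intros Hm HP Hs. apply (sign_constant_on_mul _ (s * ffact c j)). intros y Hy.
  unfold phase.
  replace (s * ffact c j * (/ INR m * ffact c j * hpow L h (c - INR j) y))
    with (s * hpow L h (c - INR j) y * (/ INR m * (ffact c j * ffact c j))) by ring.
  apply Rmult_lt_0_compat; auto.
  apply Rmult_lt_0_compat; [apply Rinv_0_lt_compat, lt_0_INR; lia | now apply Rsqr_pos_lt].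
Qed.

Lemma Rabs_phase c m L h j y :
  (0 < m)%nat ->
  Rabs (phase c m L h j y) = / INR m * Rabs (ffact c j) * Rabs (hpow L h (c - INR j) y).
Proof.
  intros Hm. unfold phase. rewrite !Rabs_mult, Rabs_inv, Rabs_pos_eq by apply pos_INR. reflexivity.
Qed.

Lemma fold_right_Cplus_seq (f : nat -> C) a n :
  fold_right Cplus (RtoC 0) (map f (seq a n)) = csum (fun i => f (a + i)%nat) n.
Proof.
  revert a; induction n as [|n IH]; intros a; auto.
  cbn [seq map fold_right]. rewrite IH, csum_shift, Nat.add_0_r.
  f_equal. apply csum_ext; intros. f_equal. lia.
Qed.

Lemma fold_right_Rplus_seq (f : nat -> R) a n :
  fold_right Rplus 0 (map f (seq a n)) = rsum (fun i => f (a + i)%nat) n.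
Proof.
  revert a; induction n as [|n IH]; intros a; auto.
  cbn [seq map fold_right]. rewrite IH, rsum_shift, Nat.add_0_r.
  f_equal. apply rsum_ext; intros. f_equal. lia.
Qed.

Lemma expsum_esum c m L h N :
  expsum c m L h N = esum (fun i => phase c m L h 0 (INR N + INR i)) N.
Proof.
  unfold expsum, csum_N_2N, esum. rewrite fold_right_Cplus_seq.
  apply csum_ext; intros i _. f_equal.
  unfold rsum_lt, phase, hpow. rewrite fold_right_Rplus_seq. simpl.
  rewrite Rminus_0_r, Rmult_1_r. f_equal.
  apply rsum_ext; intros l _. now rewrite !plus_INR.
Qed.

Lemma fold_right_Rmax_seq_ge (g : nat -> R) a n l :
  (a <= l < a + n)%nat -> g l <= fold_right Rmax 0 (map g (seq a n)).
Proof.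
  revert a; induction n as [|n IH]; intros a Hl; [lia|]. simpl.
  destruct (Nat.eq_dec l a) as [->|]; [apply Rmax_l|].
  apply Rle_trans with (fold_right Rmax 0 (map g (seq (S a) n))); [apply IH; lia | apply Rmax_r].
Qed.

Lemma hnorm_ge L h l : (l < L)%nat -> Rabs (IZR (h l)) <= hnorm L h.
Proof. intros. apply (fold_right_Rmax_seq_ge (fun l => Rabs (IZR (h l)))). lia. Qed.

Lemma hnorm_ge_1 L h : (exists l, (l < L)%nat /\ h l <> 0%Z) -> 1 <= hnorm L h.
Proof.
  intros [l [Hl Hh]]. eapply Rle_trans; [|apply (hnorm_ge L h l Hl)].
  rewrite <- abs_IZR. apply IZR_le. lia.
Qed.

(** * The estimate *)

Lemma Rpower_le_base_nonpos x y a : 0 < x <= y -> a <= 0 -> Rpower y a <= Rpower x a.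
Proof.
  intros. replace a with (- - a) by ring. rewrite !(Rpower_Ropp _ (- a)).
  apply Rinv_le_contravar; [apply exp_pos | apply Rle_Rpower_l; lra].
Qed.

Lemma Rpower_nonpos_between x y K a :
  1 <= x -> 0 < K -> x <= y <= K * x -> a <= 0 ->
  Rpower K a * Rpower x a <= Rpower y a <= Rpower x a.
Proof.
  intros. rewrite Rpower_mult_distr by lra.
  split; apply Rpower_le_base_nonpos; lra.
Qed.

Lemma Rpower_le_self x a : 1 <= x -> a <= 1 -> Rpower x a <= x.
Proof. intros. rewrite <- (Rpower_1 x) at 2 by lra. apply Rle_Rpower; lra. Qed.

Lemma Rpower_pow_Rpower Y s n : 0 < Y -> Rpower Y s ^ n = Rpower Y (s * INR n).
Proof. intros. rewrite <- Rpower_pow, Rpower_mult by apply exp_pos. reflexivity. Qed.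

(* The differencing parameter [T = min (1 / (4 Lam), N) ^ (1 / 2 ^ (p + 1))]. *)
Lemma exists_vdc_parameter (Lam N : R) p :
  0 < Lam <= / 4 -> 1 <= N ->
  exists T, 1 <= T /\ T ^ (2 ^ p) <= N /\ T ^ (2 ^ S p - 2) * Lam <= / 2 /\
            N / T <= N * Rpower (4 * Lam) (/ 2 ^ S p) + Rpower N (1 - / 2 ^ S p).
Proof.
  intros HLam HN. set (s := / 2 ^ S p).
  assert (H2p : 2 ^ S p = 2 * 2 ^ p) by reflexivity.
  assert (H1p : 1 <= 2 ^ p) by (apply pow_R1_Rle; lra).
  assert (Hs : 0 < s <= / 2).
  { unfold s. split; [apply Rinv_0_lt_compat; lra | apply Rinv_le_contravar; lra]. }
  assert (H4 : 1 <= / (4 * Lam)) by (rewrite <- Rinv_1; apply Rinv_le_contravar; lra).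
  set (Y := Rmin (/ (4 * Lam)) N).
  assert (HY : 1 <= Y) by (now apply Rmin_glb).
  assert (HsY : s * INR (2 ^ S p) = 1)
    by (unfold s; rewrite pow_INR; replace (INR 2) with 2 by (simpl; lra);
        field; apply pow_nonzero; lra).
  exists (Rpower Y s). split; [apply Rpower_ge_1; lra|]. split; [|split].
  - rewrite Rpower_pow_Rpower by lra. apply Rle_trans with (Rpower Y 1).
    + apply Rle_Rpower; [lra|]. rewrite pow_INR. replace (INR 2) with 2 by (simpl; lra).
      unfold s. rewrite H2p. replace (/ (2 * 2 ^ p) * 2 ^ p) with (/ 2)
        by (field; apply pow_nonzero; lra). lra.
    + rewrite Rpower_1 by lra. apply Rmin_r.
  - apply Rle_trans with (Rpower Y s ^ (2 ^ S p) * Lam).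
    + apply Rmult_le_compat_r; [lra|]. apply Rle_pow; [apply Rpower_ge_1; lra | lia].
    + rewrite Rpower_pow_Rpower, HsY, Rpower_1 by lra.
      apply Rle_trans with (/ (4 * Lam) * Lam); [apply Rmult_le_compat_r; [lra | apply Rmin_l]|].
      rewrite Rinv_mult, Rmult_assoc, Rinv_l by lra. lra.
  - unfold Y, Rmin. destruct (Rle_dec (/ (4 * Lam)) N).
    + unfold Rdiv, Rpower. rewrite ln_Rinv, <- exp_Ropp by lra.
      replace (- (s * - ln (4 * Lam))) with (s * ln (4 * Lam)) by ring.
      pose proof (exp_pos ((1 - s) * ln N)). lra.
    + unfold Rdiv. rewrite <- Rpower_Ropp, <- (Rpower_1 N) at 1 by lra.
      rewrite <- Rpower_plus. replace (1 + - s) with (1 - s) by ring.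
      pose proof (exp_pos (s * ln (4 * Lam))).
      pose proof (Rmult_le_pos N (exp (s * ln (4 * Lam))) ltac:(lra) ltac:(lra)).
      unfold Rpower in *. lra.
Qed.

Lemma Rpower_le_mul_Rpower N H a b :
  1 <= N -> 1 <= H -> a <= b -> Rpower N a <= H * Rpower N b.
Proof.
  intros. rewrite <- (Rmult_1_l (Rpower N a)).
  apply Rmult_le_compat; [lra | left; apply exp_pos | lra | apply Rle_Rpower; lra].
Qed.

Lemma vdc_first_term_le N H a fc s eps :
  1 <= N -> 1 <= H -> 0 < a -> 0 < s <= 1 -> eps <= (1 - fc) * s ->
  N * Rpower (a * H * Rpower N (fc - 1)) s <= Rpower a s * H * Rpower N (1 - eps).
Proof.
  intros HN HH Ha Hs Heps.
  assert (HaH : 0 < a * H) by (apply Rmult_lt_0_compat; lra).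
  rewrite <- (Rpower_mult_distr (a * H)), <- (Rpower_mult_distr a H), Rpower_mult
    by (lra || apply exp_pos).
  replace (N * (Rpower a s * Rpower H s * Rpower N ((fc - 1) * s)))
    with (Rpower a s * (Rpower H s * (Rpower N 1 * Rpower N ((fc - 1) * s))))
    by (rewrite Rpower_1 by lra; ring).
  rewrite <- Rpower_plus, Rmult_assoc. apply Rmult_le_compat_l; [left; apply exp_pos|].
  apply Rmult_le_compat; try (left; apply exp_pos).
  - rewrite <- (Rpower_1 H) at 2 by lra. apply Rle_Rpower; lra.
  - apply Rle_Rpower; lra.
Qed.

Lemma vdc_second_term_le N H a fc w eps :
  1 <= N -> 1 <= H -> 0 < a -> eps <= fc * w ->
  Rpower N (1 - w) * Rpower (a / Rpower N (fc - 1)) w <= Rpower a w * H * Rpower N (1 - eps).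
Proof.
  intros HN HH Ha Heps. unfold Rdiv.
  rewrite <- Rpower_Ropp, <- Rpower_mult_distr, Rpower_mult by (lra || apply exp_pos).
  replace (Rpower N (1 - w) * (Rpower a w * Rpower N (- (fc - 1) * w)))
    with (Rpower a w * (Rpower N (1 - w) * Rpower N (- (fc - 1) * w))) by ring.
  rewrite <- Rpower_plus, Rmult_assoc. apply Rmult_le_compat_l; [left; apply exp_pos|].
  apply Rpower_le_mul_Rpower; lra.
Qed.

Lemma dist_int_bounds x :
  0 < fracp x < 1 -> 0 < dist_int x /\ dist_int x <= fracp x /\ dist_int x <= 1 - fracp x.
Proof.
  intros. unfold dist_int. split; [apply Rmin_glb_lt; lra|]. split; [apply Rmin_l | apply Rmin_r].
Qed.

Definition saving (c : R) : R := dist_int c / Rpower 2 (c + 1).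

Lemma saving_bounds c p :
  0 < fracp c < 1 -> INR (S p) <= c + 1 ->
  0 < saving c /\ saving c <= (1 - fracp c) * / 2 ^ S p /\ saving c <= / 2 ^ S p /\
  saving c <= fracp c * / 2 ^ p.
Proof.
  intros Hfc Hp. destruct (dist_int_bounds c Hfc) as [Hd1 [Hd2 Hd3]].
  assert (H2p : 2 ^ S p <= Rpower 2 (c + 1))
    by (rewrite <- Rpower_pow by lra; apply Rle_Rpower; lra).
  assert (Hpow : 0 < 2 ^ p) by (apply pow_lt; lra).
  assert (Hle : saving c <= dist_int c * / 2 ^ S p).
  { apply Rmult_le_compat_l; [lra|]. apply Rinv_le_contravar; [simpl; lra | auto]. }
  assert (Hs : 0 < / 2 ^ S p) by (apply Rinv_0_lt_compat; simpl; lra).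
  assert (Hw : / 2 ^ p = 2 * / 2 ^ S p) by (simpl; field; lra).
  split; [apply Rdiv_lt_0_compat; [lra | apply exp_pos]|].
  split; [|split]; eapply Rle_trans; try apply Hle.
  - apply Rmult_le_compat_r; lra.
  - rewrite <- (Rmult_1_l (/ 2 ^ S p)) at 2. apply Rmult_le_compat_r; lra.
  - rewrite Hw. nra.
Qed.

Lemma Rpower_opp_mul_le x y d a : 0 < x -> y <= d * Rpower x a -> y * Rpower x (- a) <= d.
Proof.
  intros Hx Hy. rewrite Rpower_Ropp. pose proof (exp_pos (a * ln x)).
  apply Rmult_le_reg_r with (Rpower x a); [apply exp_pos|].
  unfold Rpower in *. rewrite Rmult_assoc, Rinv_l by lra. lra.
Qed.

Lemma vdc_terms_le N H T khi klo fc p eps :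
  1 <= N -> 1 <= H -> 0 < khi -> 0 < klo ->
  eps <= (1 - fc) * / 2 ^ S p -> eps <= / 2 ^ S p -> eps <= fc * / 2 ^ p ->
  N / T <= N * Rpower (4 * (khi * H * Rpower N (fc - 1))) (/ 2 ^ S p) +
           Rpower N (1 - / 2 ^ S p) ->
  N / T + Rpower N (1 - / 2 ^ p) * Rpower (4 / (klo * Rpower N (fc - 1))) (/ 2 ^ p) <=
  (Rpower (4 * khi) (/ 2 ^ S p) + 1 + Rpower (4 / klo) (/ 2 ^ p)) * H * Rpower N (1 - eps).
Proof.
  intros HN HH Hkhi Hklo He1 He2 He3 HNT.
  assert (Hs : 0 < / 2 ^ S p <= 1).
  { pose proof (pow_R1_Rle 2 (S p) ltac:(lra)).
    split; [apply Rinv_0_lt_compat; lra | rewrite <- Rinv_1; apply Rinv_le_contravar; lra]. }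
  pose proof (vdc_first_term_le N H (4 * khi) fc (/ 2 ^ S p) eps HN HH ltac:(lra) Hs He1).
  pose proof (Rpower_le_mul_Rpower N H (1 - / 2 ^ S p) (1 - eps) HN HH ltac:(lra)).
  pose proof (vdc_second_term_le N H (4 / klo) fc (/ 2 ^ p) eps HN HH
                ltac:(apply Rdiv_lt_0_compat; lra) He3).
  replace (4 * (khi * H * Rpower N (fc - 1))) with (4 * khi * H * Rpower N (fc - 1)) in HNT
    by ring.
  replace (4 / (klo * Rpower N (fc - 1))) with (4 / klo / Rpower N (fc - 1))
    by (field; split; [apply Rgt_not_eq, exp_pos | lra]).
  lra.
Qed.

Lemma expsum_le_differenced c m L p :
  exists Kp, 0 < Kp /\
  forall N h T l Lam, (1 <= N)%nat -> (S p <= L)%nat ->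
    (forall y, INR N <= y <= (INR L + 2) * INR N -> l <= Rabs (phase c m L h (S p) y) <= Lam) ->
    sign_constant_on (phase c m L h (S p)) (INR N) ((INR L + 2) * INR N) ->
    sign_constant_on (phase c m L h (S (S p))) (INR N) ((INR L + 2) * INR N) ->
    0 < l <= / 2 -> 1 <= T -> T ^ (2 ^ p) <= INR N -> T ^ (2 ^ S p - 2) * Lam <= / 2 ->
    Cmod (expsum c m L h N) <=
    Kp * (INR N / T + Rpower (INR N) (1 - / 2 ^ p) * Rpower (4 / l) (/ 2 ^ p)).
Proof.
  destruct (weyl_van_der_corput_iterated p) as [Kp [HKp Hv]]. exists Kp. split; auto.
  intros N h T l Lam HN HpL Habs Hs1 Hs2 Hl HT HTN HTL.
  assert (HN1 : 1 <= INR N) by (apply (le_INR 1); lia).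
  assert (HLam : 0 <= Lam)
    by (pose proof (Habs (INR N) ltac:(pose proof (pos_INR L); nra)); lra).
  rewrite expsum_esum. apply Hv; auto.
  { apply Rmult_le_reg_r with l; [lra|]. unfold Rdiv. rewrite Rmult_assoc, Rinv_l; lra. }
  intros rs N' Hlen Hadm HN'.
  destruct (admissible_bounds rs T HT Hadm) as [[Hp1 Hp2] Hsum]. rewrite Hlen in Hp2, Hsum.
  apply (kusmin_landau_differenced (phase c m L h) rs (INR N) ((INR L + 2) * INR N) N' l Lam);
    rewrite ?Hlen; auto; [intros; now apply phase_deriv | lra | |].
  - eapply Rle_trans; [|apply HTL]. now apply Rmult_le_compat_r.
  - assert (INR N' <= INR N) by now apply le_INR.
    assert (INR p <= INR L) by (apply le_INR; lia).
    assert (INR p * T ^ (2 ^ p) <= INR L * INR N)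
      by (apply Rmult_le_compat; auto; [apply pos_INR | apply pow_le; lra]).
    lra.
Qed.

Section Fixed_exponent.

Variables (c : R) (m L : nat).
Hypotheses (Hz : forall z : Z, c <> IZR z) (Hm : (0 < m)%nat).
Hypotheses (HL : INR L = c - fracp c + 1) (Hfc : 0 < fracp c < 1).

Lemma ffact_nonzero j k : ffact (c - INR j) k <> 0.
Proof.
  induction k as [|k IH]; simpl; [lra|]. apply Rmult_integral_contrapositive. split; auto.
  intros H. apply (Hz (Z.of_nat (j + k))). rewrite <- INR_IZR_INZ, plus_INR. lra.
Qed.

Lemma ffact_c_nonzero k : ffact c k <> 0.
Proof. pose proof (ffact_nonzero 0 k) as H. now rewrite Rminus_0_r in H. Qed.

(* [q = L - k0] is chosen so that the leading exponent [c - q - k0] is [{c} - 1]. *)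
Lemma phase_derivative_bounds k0 :
  (k0 < L)%nat ->
  exists klo khi delta, 0 < klo /\ 0 < khi /\ 0 < delta /\
  forall N h, 1 <= INR N -> leading_index L h k0 -> hnorm L h <= delta * INR N ->
    (forall y, INR N <= y <= (INR L + 2) * INR N ->
       klo * Rpower (INR N) (fracp c - 1) <= Rabs (phase c m L h (L - k0) y) <=
       khi * hnorm L h * Rpower (INR N) (fracp c - 1)) /\
    sign_constant_on (phase c m L h (L - k0)) (INR N) ((INR L + 2) * INR N) /\
    sign_constant_on (phase c m L h (S (L - k0))) (INR N) ((INR L + 2) * INR N).
Proof.
  intros Hk0. set (q := (L - k0)%nat).
  assert (Hb1 : c - INR q - INR k0 = fracp c - 1)
    by (replace (INR k0) with (INR L - INR q) by (rewrite <- minus_INR by lia; f_equal; lia); lra).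
  destruct (hpow_leading_term L (c - INR q) k0 Hk0 (ffact_nonzero q k0))
    as [d1 [k1 [k2 [Hd1 [Hk1 [Hk2 Hlead1]]]]]].
  destruct (hpow_leading_term L (c - INR (S q)) k0 Hk0 (ffact_nonzero (S q) k0))
    as [d2 [k1' [k2' [Hd2 [_ [_ Hlead2]]]]]].
  set (A := / INR m * Rabs (ffact c q)).
  assert (HA : 0 < A).
  { apply Rmult_lt_0_compat; [apply Rinv_0_lt_compat, lt_0_INR; lia|].
    apply Rabs_pos_lt, ffact_c_nonzero. }
  assert (HL2 : 0 < INR L + 2) by (pose proof (pos_INR L); lra).
  exists (A * k1 * Rpower (INR L + 2) (fracp c - 1)), (A * k2), (Rmin d1 d2).
  split; [apply Rmult_lt_0_compat; [nra | apply exp_pos]|].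
  split; [nra|]. split; [now apply Rmin_glb_lt|].
  intros N h HN Hlead HH. set (W := hnorm L h) in *.
  assert (Hh : forall l, (l < L)%nat -> Rabs (IZR (h l)) <= W) by (intros; now apply hnorm_ge).
  assert (HW : 0 <= W) by (eapply Rle_trans; [apply Rabs_pos | apply (Hh 0%nat); lia]).
  assert (Hdy : forall y, INR N <= y -> W <= d1 * y /\ W <= d2 * y).
  { intros y Hy. pose proof (Rmin_l d1 d2); pose proof (Rmin_r d1 d2).
    pose proof (Rmin_glb_lt d1 d2 0 Hd1 Hd2). split; nra. }
  split; [|split].
  - intros y Hy. destruct (Hdy y (proj1 Hy)) as [Hy1 _].
    destruct (Hlead1 h W y Hlead Hh ltac:(lra) Hy1) as [_ [Hlo Hhi]]. rewrite Hb1 in Hlo, Hhi.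
    destruct (Rpower_nonpos_between (INR N) y (INR L + 2) (fracp c - 1)) as [Hlow Hup]; try lra.
    rewrite Rabs_phase by auto. fold A. rewrite !Rmult_assoc.
    split; apply Rmult_le_compat_l; try lra.
    + eapply Rle_trans; [|apply Hlo]. apply Rmult_le_compat_l; lra.
    + eapply Rle_trans; [apply Hhi|]. rewrite Rmult_assoc.
      apply Rmult_le_compat_l; [lra|]. apply Rmult_le_compat_l; lra.
  - apply phase_sign_constant with (newton_coef L h k0 * ffact (c - INR q) k0);
      auto using ffact_c_nonzero.
    intros y Hy. destruct (Hdy y (proj1 Hy)) as [Hy1 _].
    now apply (Hlead1 h W y Hlead Hh ltac:(lra) Hy1).
  - apply phase_sign_constant with (newton_coef L h k0 * ffact (c - INR (S q)) k0);
      auto using ffact_c_nonzero.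
    intros y Hy. destruct (Hdy y (proj1 Hy)) as [_ Hy2].
    now apply (Hlead2 h W y Hlead Hh ltac:(lra) Hy2).
Qed.

(* Difference [p = L - k0 - 1] times, finish with Kusmin-Landau, and choose the
   parameter [T] of [exists_vdc_parameter]. *)
Lemma expsum_bound_leading k0 :
  (k0 < L)%nat ->
  exists C delta, 0 < C /\ 0 < delta /\
  forall N h, (0 < N)%nat -> leading_index L h k0 -> 1 <= hnorm L h ->
    hnorm L h <= delta * Rpower (INR N) (1 - fracp c) ->
    Cmod (expsum c m L h N) <= C * hnorm L h * Rpower (INR N) (1 - saving c).
Proof.
  intros Hk0. set (p := (L - S k0)%nat).
  destruct (phase_derivative_bounds k0 Hk0)
    as [klo [khi [d0 [Hklo [Hkhi [Hd0 Hph]]]]]].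
  replace (L - k0)%nat with (S p) in Hph by lia.
  destruct (expsum_le_differenced c m L p) as [Kp [HKp Hdiff]].
  destruct (saving_bounds c p Hfc) as [He0 [He1 [He2 He3]]].
  { assert (INR (S p) <= INR L) by (apply le_INR; lia). lra. }
  exists (Kp * (Rpower (4 * khi) (/ 2 ^ S p) + 1 + Rpower (4 / klo) (/ 2 ^ p))),
         (Rmin d0 (/ (4 * khi))).
  split; [apply Rmult_lt_0_compat; [lra | pose proof (exp_pos (/ 2 ^ S p * ln (4 * khi)));
           pose proof (exp_pos (/ 2 ^ p * ln (4 / klo))); unfold Rpower; lra]|].
  split; [apply Rmin_glb_lt; [lra | apply Rinv_0_lt_compat; lra]|].
  intros N h HN Hlead HH1 HHN.
  assert (HN1 : 1 <= INR N) by (apply (le_INR 1); lia).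
  assert (HNI : INR N <= INR N <= (INR L + 2) * INR N) by (pose proof (pos_INR L); nra).
  assert (HX : 0 < Rpower (INR N) (fracp c - 1)) by apply exp_pos.
  destruct (Hph N h HN1 Hlead) as [Hb [Hs1 Hs2]].
  { eapply Rle_trans; [apply HHN|].
    apply Rmult_le_compat; [| left; apply exp_pos | apply Rmin_l | apply Rpower_le_self; lra].
    apply Rlt_le, Rmin_glb_lt; [lra | apply Rinv_0_lt_compat; lra]. }
  set (Lam := khi * hnorm L h * Rpower (INR N) (fracp c - 1)) in *.
  assert (HLam : 0 < Lam <= / 4).
  { split; [apply Rmult_lt_0_compat; [apply Rmult_lt_0_compat|]; lra|].
    assert (HHX : hnorm L h * Rpower (INR N) (fracp c - 1) <= / (4 * khi)).
    { replace (fracp c - 1) with (- (1 - fracp c)) by ring.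
      apply Rpower_opp_mul_le; [lra|]. eapply Rle_trans; [apply HHN|].
      apply Rmult_le_compat_r; [left; apply exp_pos | apply Rmin_r]. }
    unfold Lam. rewrite Rmult_assoc.
    apply Rle_trans with (khi * / (4 * khi)); [apply Rmult_le_compat_l; lra | right; field; lra]. }
  assert (Hlam : 0 < klo * Rpower (INR N) (fracp c - 1) <= / 2)
    by (pose proof (Hb (INR N) HNI); split; [apply Rmult_lt_0_compat|]; lra).
  destruct (exists_vdc_parameter Lam (INR N) p HLam HN1) as [T [HT [HTN [HTL HNT]]]].
  eapply Rle_trans; [apply (Hdiff N h T (klo * Rpower (INR N) (fracp c - 1)) Lam); auto; lia|].
  rewrite !Rmult_assoc. apply Rmult_le_compat_l; [lra|]. rewrite <- !Rmult_assoc.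
  now apply vdc_terms_le.
Qed.

End Fixed_exponent.

Lemma uniform_constants (n : nat) (P : nat -> R -> R -> Prop) :
  (forall k C d C' d', P k C d -> C <= C' -> 0 < d' <= d -> P k C' d') ->
  (forall k, (k < n)%nat -> exists C d, 0 < C /\ 0 < d /\ P k C d) ->
  exists C d, 0 < C /\ 0 < d /\ forall k, (k < n)%nat -> P k C d.
Proof.
  intros Hmono. induction n as [|n IH]; intros Hall.
  - exists 1, 1. repeat split; try lra. intros; lia.
  - destruct IH as [C1 [d1 [HC1 [Hd1 H1]]]]; [intros; apply Hall; lia|].
    destruct (Hall n ltac:(lia)) as [C2 [d2 [HC2 [Hd2 H2]]]].
    exists (Rmax C1 C2), (Rmin d1 d2).
    pose proof (Rmax_l C1 C2); pose proof (Rmax_r C1 C2).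
    pose proof (Rmin_l d1 d2); pose proof (Rmin_r d1 d2); pose proof (Rmin_glb_lt d1 d2 0 Hd1 Hd2).
    split; [lra|]. split; [lra|].
    intros k Hk. destruct (Nat.eq_dec k n) as [->|Hne].
    + apply (Hmono n C2 d2); auto; lra.
    + apply (Hmono k C1 d1); [apply H1; lia | lra | lra].
Qed.

Lemma floor_succ_spec c :
  1 < c -> (forall z : Z, c <> IZR z) ->
  INR (Z.to_nat (rfloor c) + 1) = c - fracp c + 1 /\ 0 < fracp c < 1.
Proof.
  intros Hc Hz. unfold fracp, rfloor. destruct (base_Int_part c) as [H1 H2].
  assert (H3 : IZR (Int_part c) < c)
    by (destruct H1 as [|H1]; auto; exfalso; now apply (Hz (Int_part c))).
  assert (Hp : (0 <= Int_part c)%Z) by (apply le_IZR; lra).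
  rewrite plus_INR, INR_IZR_INZ, Z2Nat.id by auto. simpl. split; [ring | lra].
Qed.

Theorem proposition2 :
  forall (c : R), 1 < c -> (forall z : Z, c <> IZR z) ->
  forall (m : nat), (0 < m)%nat ->
  let L := (Z.to_nat (rfloor c) + 1)%nat in
  exists (C0 delta : R), 0 < C0 /\ 0 < delta /\
    forall (N : nat) (h : nat -> Z),
      (0 < N)%nat ->
      (exists l, (l < L)%nat /\ h l <> 0%Z) ->
      hnorm L h <= delta * Rpower (INR N) (1 - fracp c) ->
      Cmod (expsum c m L h N)
        <= C0 * hnorm L h * Rpower (INR N) (1 - dist_int c / Rpower 2 (c + 1)).
Proof.
  intros c Hc Hz m Hm L.
  destruct (floor_succ_spec c Hc Hz) as [HL Hfc]. fold L in HL.
  destruct (uniform_constants L (fun k C0 delta => forall N h,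
      (0 < N)%nat -> leading_index L h k -> 1 <= hnorm L h ->
      hnorm L h <= delta * Rpower (INR N) (1 - fracp c) ->
      Cmod (expsum c m L h N) <= C0 * hnorm L h * Rpower (INR N) (1 - saving c)))
    as [C0 [delta [HC0 [Hdelta Hall]]]].
  - intros k C d C' d' Hk HC Hd N h HN Hlead HH1 HH.
    eapply Rle_trans; [apply Hk; auto|].
    + eapply Rle_trans; [apply HH|]. apply Rmult_le_compat_r; [left; apply exp_pos | lra].
    + apply Rmult_le_compat_r; [left; apply exp_pos|]. apply Rmult_le_compat_r; lra.
  - intros k Hk. exact (expsum_bound_leading c m L Hz Hm HL Hfc k Hk).
  - exists C0, delta. split; [auto|]. split; [auto|]. intros N h HN Hh HH.
    destruct (leading_index_exists L h Hh) as [k0 [Hk0 Hlead]].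
    exact (Hall k0 Hk0 N h HN Hlead (hnorm_ge_1 L h Hh) HH).
Qed.
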